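(* The category $\mathbf{StoneLPries}$ of Stone L-spaces and L-morphisms is equivalent to the category $\mathbf{Stone}$ of Stone spaces and continuous maps, and dually equivalent to the category $\mathbf{StoneFrm}$ of Stone frames and frame homomorphisms.
   Context: A frame is a complete lattice satisfying $a\wedge\bigvee S=\bigvee\{a\wedge s\mid s\in S\}$; frame homomorphisms preserve finite meets and arbitrary joins. In a frame $L$, $a\ll b$ means whenever $b\le\bigvee S$ there is finite $T\subseteq S$ with $a\le\bigvee T$; $L$ is compact if $1\ll1$. With $a^*=\bigvee\{x\mid a\wedge x=0\}$, $a$ is complemented if $a\vee a^*=1$. A Stone frame is a compact frame in which every element is the join of the complemented elements below it. A Priestley space is a Stone space $X$ with a partial order such that clopen upsets separate points. An L-space is a Priestley space in which the downset of each clopen set is clopen and the closure of each open upset is open. ${\sf ClopUp}(X)$ is the set of clopen upsets; $\mathrm{cl}$ denotes closure. An L-morphism is a continuous order-preserving map $f:X\to X'$ between L-spaces with $f^{-1}(\mathrm{cl}\,U)=\mathrm{cl}\,f^{-1}(U)$ for every open upset $U$ of $X'$. For $U,V\in{\sf ClopUp}(X)$, $V\ll U$ means that for every open upset $W$, $U\subseteq\mathrm{cl}\,W$ implies $V\subseteq W$; $\ker U=\bigcup\{V\in{\sf ClopUp}(X)\mid V\ll U\}$; $X$ is L-compact if $X=\ker X$. A biset is a set that is both an upset and a downset; ${\sf ClopBi}(X)$ is the set of clopen bisets; $\mathrm{cen}\,U=\bigcup\{V\in{\sf ClopBi}(X)\mid V\subseteq U\}$. A Stone L-space is an L-compact L-space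 with $\mathrm{cen}\,U$ dense in $U$ for each $U\in{\sf ClopUp}(X)$. A Stone space is a compact Hausdorff zero-dimensional space. *)

From HB Require Import structures.
From mathcomp Require Import all_boot all_order.
From mathcomp Require Import boolp classical_sets functions cardinality topology.

Set Implicit Arguments.
Unset Strict Implicit.
Unset Printing Implicit Defensive.

Local Open Scope classical_set_scope.

Record category := Category {
  ob : Type;
  hom : ob -> ob -> Type;
  idm : forall a, hom a a;
  comp : forall a b c, hom b c -> hom a b -> hom a c;
  comp_idl : forall a b (f : hom a b), comp (idm b) f = f;
  comp_idr : forall a b (f : hom a b), comp f (idm a) = f;
  compA : forall a b c d (h : hom c d) (g : hom b c) (f : hom a b),
      comp h (comp g f) = comp (comp h g) f }.

Arguments hom : clear implicits.
Arguments idm {_} _.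
Arguments comp {_ _ _ _}.

Definition op_category (C : category) : category :=
  @Category (ob C) (fun a b => hom C b a) (@idm C)
    (fun a b c (g : hom C c b) (f : hom C b a) => comp f g)
    (fun a b f => comp_idr f) (fun a b f => comp_idl f)
    (fun a b c d h g f => esym (compA f g h)).

Record functor (C D : category) := Functor {
  fobj :> ob C -> ob D;
  fmap : forall a b, hom C a b -> hom D (fobj a) (fobj b);
  fmap_id : forall a, fmap (idm a) = idm (fobj a);
  fmap_comp : forall a b c (g : hom C b c) (f : hom C a b),
      fmap (comp g f) = comp (fmap g) (fmap f) }.

Arguments fmap {C D} _ {a b}.

Definition id_functor (C : category) : functor C C :=
  @Functor C C (fun a => a) (fun a b f => f) (fun a => erefl) (fun a b c g f => erefl).

Lemma functor_comp_id (C D E : category) (G : functor D E) (F : functor C D) (a : ob C) :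
  fmap G (fmap F (idm a)) = idm (G (F a)).
Proof. by rewrite fmap_id fmap_id. Qed.

Lemma functor_comp_comp (C D E : category) (G : functor D E) (F : functor C D)
  (a b c : ob C) (g : hom C b c) (f : hom C a b) :
  fmap G (fmap F (comp g f)) = comp (fmap G (fmap F g)) (fmap G (fmap F f)).
Proof. by rewrite fmap_comp fmap_comp. Qed.

Definition comp_functor (C D E : category) (G : functor D E) (F : functor C D) :
  functor C E :=
  @Functor C E (fun a => G (F a)) (fun a b f => fmap G (fmap F f))
    (@functor_comp_id C D E G F) (@functor_comp_comp C D E G F).

Definition nat_iso (C D : category) (F G : functor C D) : Prop :=
  exists (alpha : forall a, hom D (F a) (G a)) (beta : forall a, hom D (G a) (F a)),
    [/\ forall a, comp (beta a) (alpha a) = idm (F a),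
        forall a, comp (alpha a) (beta a) = idm (G a) &
        forall a b (f : hom C a b), comp (fmap G f) (alpha a) = comp (alpha b) (fmap F f)].

Definition equivalent (C D : category) : Prop :=
  exists (F : functor C D) (G : functor D C),
    nat_iso (id_functor C) (comp_functor G F) /\
    nat_iso (comp_functor F G) (id_functor D).

Definition dually_equivalent (C D : category) : Prop :=
  equivalent C (op_category D).

Lemma sig_eq (A : Type) (P : A -> Prop) (x y : {a : A | P a}) :
  proj1_sig x = proj1_sig y -> x = y.
Proof.
destruct x as [a pa], y as [b pb]; simpl => eab; subst b.
by rewrite (Prop_irrelevance pa pb).
Qed.

Definition stone_space (X : topologicalType) : Prop :=
  [/\ compact [set: X], hausdorff_space X & zero_dimensional X].

Definition stone_ob := {X : topologicalType | stone_space X}.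

Definition cont_hom (X Y : topologicalType) := {f : X -> Y | continuous f}.

Lemma cont_id (X : topologicalType) : continuous (@id X).
Proof. by move=> x. Qed.

Lemma cont_comp (X Y Z : topologicalType) (g : Y -> Z) (f : X -> Y) :
  continuous g -> continuous f -> continuous (g \o f).
Proof. by move=> cg cf x; apply: continuous_comp; [apply: cf | apply: cg]. Qed.

Definition Stone : category.
Proof.
refine (@Category stone_ob (fun X Y => cont_hom (proj1_sig X) (proj1_sig Y))
  (fun X => exist _ id (@cont_id _))
  (fun X Y Z g f => exist _ (proj1_sig g \o proj1_sig f)
       (cont_comp (proj2_sig g) (proj2_sig f))) _ _ _).
- by move=> a b f; apply: sig_eq.
- by move=> a b f; apply: sig_eq.
- by move=> a b c d h g f; apply: sig_eq.
Defined.

Record ordtop := OrdTop {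
  otop :> topologicalType;
  ole : otop -> otop -> Prop }.

Definition partial_order (T : Type) (r : T -> T -> Prop) : Prop :=
  [/\ forall x, r x x,
      forall x y, r x y -> r y x -> x = y &
      forall x y z, r x y -> r y z -> r x z].

Definition upset (X : ordtop) (U : set X) : Prop :=
  forall x y, U x -> ole x y -> U y.
Definition downset (X : ordtop) (U : set X) : Prop :=
  forall x y, U y -> ole x y -> U x.
Definition biset (X : ordtop) (U : set X) : Prop := upset U /\ downset U.

Definition down (X : ordtop) (A : set X) : set X :=
  [set x | exists2 y, A y & ole x y].

Definition clopup (X : ordtop) (U : set X) : Prop := clopen U /\ upset U.

Definition priestley_space (X : ordtop) : Prop :=
  [/\ stone_space X, partial_order (@ole X) &
      forall x y : X, ~ ole x y -> exists U : set X, [/\ clopup U, U x & ~ U y]].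

Definition L_space (X : ordtop) : Prop :=
  [/\ priestley_space X,
      forall A : set X, clopen A -> clopen (down A) &
      forall U : set X, open U -> upset U -> open (closure U)].

Definition Lway_below (X : ordtop) (V U : set X) : Prop :=
  forall W : set X, open W -> upset W -> U `<=` closure W -> V `<=` W.

Definition Lker (X : ordtop) (U : set X) : set X :=
  [set x | exists V : set X, [/\ clopup V, Lway_below V U & V x]].

Definition L_compact (X : ordtop) : Prop := [set: X] = Lker [set: X].

Definition cen (X : ordtop) (U : set X) : set X :=
  [set x | exists V : set X, [/\ clopen V, biset V, V `<=` U & V x]].

Definition stone_L_space (X : ordtop) : Prop :=
  [/\ L_space X, L_compact X &
      forall U : set X, clopup U -> U `<=` closure (cen U)].

Definition L_morphism (X Y : ordtop) (f : X -> Y) : Prop :=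
  [/\ continuous f,
      (forall x y, ole x y -> ole (f x) (f y)) &
      forall U : set Y, open U -> upset U ->
        f @^-1` (closure U) = closure (f @^-1` U)].

Lemma L_morphism_id (X : ordtop) : L_morphism (@id X).
Proof. by split=> // x. Qed.

Lemma L_morphism_comp (X Y Z : ordtop) (g : Y -> Z) (f : X -> Y) :
  L_morphism g -> L_morphism f -> L_morphism (g \o f).
Proof.
move=> [cg mg clg] [cf mf clf]; split.
- exact: cont_comp.
- by move=> x y xy; apply/mg/mf.
- move=> U oU uU; rewrite comp_preimage clg // clf //.
  + by apply: open_comp => // x _; apply: cg.
  + by move=> x y Ux xy; apply: uU Ux (mg _ _ xy).
Qed.

Definition stoneL_ob := {X : ordtop | stone_L_space X}.

Definition StoneLPries : category.
Proof.
refine (@Category stoneL_ob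
  (fun X Y => {f : proj1_sig X -> proj1_sig Y | L_morphism f})
  (fun X => exist _ id (@L_morphism_id _))
  (fun X Y Z g f => exist _ (proj1_sig g \o proj1_sig f)
       (L_morphism_comp (proj2_sig g) (proj2_sig f))) _ _ _).
- by move=> a b f; apply: sig_eq.
- by move=> a b f; apply: sig_eq.
- by move=> a b c d h g f; apply: sig_eq.
Defined.

Record frame := Frame {
  fcar :> Type;
  fle : fcar -> fcar -> Prop;
  fsup : set fcar -> fcar;
  fmeet : fcar -> fcar -> fcar;
  fle_po : partial_order fle;
  fsup_ub : forall (S : set fcar) a, S a -> fle a (fsup S);
  fsup_least : forall (S : set fcar) b, (forall a, S a -> fle a b) -> fle (fsup S) b;
  fmeet_glb : forall a b c, fle c (fmeet a b) <-> (fle c a /\ fle c b);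
  fdistr : forall a (S : set fcar), fmeet a (fsup S) = fsup [set fmeet a s | s in S] }.

Arguments fle {f}.
Arguments fsup {f}.
Arguments fmeet {f}.

Definition ftop (L : frame) : L := fsup [set: L].
Definition fbot (L : frame) : L := fsup (@set0 L).
Definition fjoin (L : frame) (a b : L) : L := fsup [set a; b].

Definition fway_below (L : frame) (a b : L) : Prop :=
  forall S : set L, fle b (fsup S) ->
    exists T : set L, [/\ finite_set T, T `<=` S & fle a (fsup T)].

Definition compact_frame (L : frame) : Prop := fway_below (ftop L) (ftop L).

Definition pseudocompl (L : frame) (a : L) : L :=
  fsup [set x | fmeet a x = fbot L].

Definition complemented (L : frame) (a : L) : Prop :=
  fjoin a (pseudocompl a) = ftop L.

Definition stone_frame (L : frame) : Prop :=
  compact_frame L /\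
  forall a : L, a = fsup [set c | complemented c /\ fle c a].

Definition frame_hom (L M : frame) (h : L -> M) : Prop :=
  [/\ h (ftop L) = ftop M,
      forall a b, h (fmeet a b) = fmeet (h a) (h b) &
      forall S : set L, h (fsup S) = fsup (h @` S)].

Lemma frame_hom_id (L : frame) : frame_hom (@id L).
Proof. by split=> // S; rewrite image_id. Qed.

Lemma frame_hom_comp (L M N : frame) (g : M -> N) (f : L -> M) :
  frame_hom g -> frame_hom f -> frame_hom (g \o f).
Proof.
move=> [g1 gm gs] [f1 fm fs]; split => /=.
- by rewrite f1 g1.
- by move=> a b; rewrite fm gm.
- by move=> S; rewrite fs gs image_comp.
Qed.

Definition stonefrm_ob := {L : frame | stone_frame L}.

Definition StoneFrm : category.
Proof.
refine (@Category stonefrm_ob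
  (fun L M => {h : proj1_sig L -> proj1_sig M | frame_hom h})
  (fun L => exist _ id (@frame_hom_id _))
  (fun L M N g f => exist _ (proj1_sig g \o proj1_sig f)
       (frame_hom_comp (proj2_sig g) (proj2_sig f))) _ _ _).
- by move=> a b f; apply: sig_eq.
- by move=> a b f; apply: sig_eq.
- by move=> a b c d h g f; apply: sig_eq.
Defined.

(* Both equivalences go through Stone frames.  The open sets of a Stone space
   form a Stone frame, and a Stone frame L is recovered as the frame of opens of
   the space pt L of its completely prime filters: complemented elements of a
   compact frame are compact, so the complemented part of a prime filter is
   completely prime, and these filters separate the elements of L.  The clopen
   upsets of a Stone L-space form a Stone frame (joins are closures of unions,
   L-compactness gives compactness, density of the centre gives the
   complemented base), and a Stone frame L is recovered as the clopen upsets of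
   its Priestley space X_L of prime filters.  In both cases points correspond
   to (completely) prime filters of the frame, which makes the two functors
   full and faithful.  So Stone and StoneLPries are both dually equivalent to
   StoneFrm, hence equivalent to each other. *)

From Pilot Require Import Defs.
From HB Require Import structures.
From mathcomp Require Import all_boot all_order.
From mathcomp Require Import boolp classical_sets functions cardinality topology.

Set Implicit Arguments.
Unset Strict Implicit.
Unset Printing Implicit Defensive.

Local Open Scope classical_set_scope.

Local Notation "g \oc f" := (Defs.comp g f) (at level 40, left associativity).

(** * Equivalences of categories *)

Section NaturalIsomorphisms.
Variables C D : category.

Lemma nat_iso_sym (F G : functor C D) : nat_iso F G -> nat_iso G F.
Proof.
move=> [al [be [beal albe nat]]]; exists be, al; split => // a b f.
have := nat a b f => /(congr1 (fun k => be b \oc (k \oc be a))).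
by rewrite !Defs.compA beal Defs.comp_idl -!Defs.compA albe Defs.comp_idr.
Qed.

Lemma nat_iso_trans (F G H : functor C D) :
  nat_iso F G -> nat_iso G H -> nat_iso F H.
Proof.
move=> [al [be [beal albe nat]]] [al' [be' [beal' albe' nat']]].
exists (fun a => al' a \oc al a), (fun a => be a \oc be' a); split.
- by move=> a; rewrite -Defs.compA (Defs.compA (be' a)) beal' Defs.comp_idl beal.
- by move=> a; rewrite -Defs.compA (Defs.compA (al a)) albe Defs.comp_idl albe'.
- by move=> a b f; rewrite Defs.compA nat' -Defs.compA nat Defs.compA.
Qed.

Lemma nat_iso_postcomp (E : category) (K : functor D E) (F G : functor C D) :
  nat_iso F G -> nat_iso (comp_functor K F) (comp_functor K G).
Proof.
move=> [al [be [beal albe nat]]].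
exists (fun a => Defs.fmap K (al a)), (fun a => Defs.fmap K (be a)); split => /=.
- by move=> a; rewrite -Defs.fmap_comp beal Defs.fmap_id.
- by move=> a; rewrite -Defs.fmap_comp albe Defs.fmap_id.
- by move=> a b f; rewrite -!Defs.fmap_comp nat.
Qed.

Lemma nat_iso_precomp (B : category) (K : functor B C) (F G : functor C D) :
  nat_iso F G -> nat_iso (comp_functor F K) (comp_functor G K).
Proof.
move=> [al [be [beal albe nat]]].
by exists (fun a => al (K a)), (fun a => be (K a)); split => //= a b f.
Qed.

End NaturalIsomorphisms.

Lemma equivalent_sym (C D : category) : equivalent C D -> equivalent D C.
Proof. by move=> [F [G [unit counit]]]; exists G, F; split; apply: nat_iso_sym. Qed.

Lemma equivalent_trans (C D E : category) :
  equivalent C D -> equivalent D E -> equivalent C E.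
Proof.
move=> [F [G [unit counit]]] [F' [G' [unit' counit']]].
exists (comp_functor F' F), (comp_functor G G'); split.
- exact: nat_iso_trans unit (nat_iso_precomp F (nat_iso_postcomp G unit')).
- exact: nat_iso_trans (nat_iso_precomp G' (nat_iso_postcomp F' counit)) counit'.
Qed.

Section FullyFaithfulEssentiallySurjective.
Variables (C D : category) (F : functor C D).
Hypothesis faithful : forall a b (f f' : hom C a b), Defs.fmap F f = Defs.fmap F f' -> f = f'.
Hypothesis full : forall a b (g : hom D (F a) (F b)), exists f, Defs.fmap F f = g.
Hypothesis ess_surj : forall d, exists c (u : hom D (F c) d) (v : hom D d (F c)),
  v \oc u = idm (F c) /\ u \oc v = idm d.

Let iso_witness d : {c : ob C & {u : hom D (F c) d & {v : hom D d (F c) |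
  v \oc u = idm (F c) /\ u \oc v = idm d}}}.
Proof.
have /cid [c /cid [u /cid [v uv]]] := ess_surj d.
by exists c, u, v.
Qed.

Let preim a b (g : hom D (F a) (F b)) : hom C a b := proj1_sig (cid (full g)).
Let preimK a b (g : hom D (F a) (F b)) : Defs.fmap F (preim g) = g.
Proof. exact: proj2_sig (cid (full g)). Qed.

Let G0 d := projT1 (iso_witness d).
Let u d : hom D (F (G0 d)) d := projT1 (projT2 (iso_witness d)).
Let v d : hom D d (F (G0 d)) := proj1_sig (projT2 (projT2 (iso_witness d))).
Let vu d : v d \oc u d = idm _. Proof. exact: (proj2_sig (projT2 (projT2 (iso_witness d)))).1. Qed.
Let uv d : u d \oc v d = idm _. Proof. exact: (proj2_sig (projT2 (projT2 (iso_witness d)))).2. Qed.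

Let G1 d d' (g : hom D d d') : hom C (G0 d) (G0 d') := preim (v d' \oc (g \oc u d)).

Let G1_id d : G1 (idm d) = idm (G0 d).
Proof. by apply: faithful; rewrite preimK Defs.fmap_id Defs.comp_idl vu. Qed.

Let G1_comp d1 d2 d3 (g : hom D d2 d3) (f : hom D d1 d2) :
  G1 (g \oc f) = G1 g \oc G1 f.
Proof.
apply: faithful; rewrite Defs.fmap_comp !preimK.
by rewrite !Defs.compA -(Defs.compA _ (u d2)) uv Defs.comp_idr -!Defs.compA.
Qed.

Let G : functor D C := @Functor D C G0 G1 G1_id G1_comp.

Lemma fully_faithful_ess_surj_equivalent : equivalent C D.
Proof.
exists F, G; split.
- exists (fun a => preim (v (F a))), (fun a => preim (u (F a))); split.
  + by move=> a; apply: faithful; rewrite Defs.fmap_comp !preimK Defs.fmap_id uv.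
  + by move=> a; apply: faithful; rewrite Defs.fmap_comp !preimK Defs.fmap_id vu.
  + move=> a b f /=; apply: faithful; rewrite !Defs.fmap_comp !preimK.
    by rewrite -!Defs.compA uv Defs.comp_idr.
- exists u, v; split => // a b g /=.
  by rewrite /G1 preimK Defs.compA uv Defs.comp_idl.
Qed.

End FullyFaithfulEssentiallySurjective.

(** * Compactness and zero-dimensionality *)

Lemma finite_set_ind (T : Type) (P : set T -> Prop) : P set0 ->
  (forall A x, finite_set A -> P A -> P (x |` A)) -> forall A, finite_set A -> P A.
Proof.
move=> P0 PU A /(@finite_seqP {classic T}) [s ->].
elim: s => [|a s IH]; first by rewrite set_nil.
have -> : [set` a :: s] = a |` [set` s].
  by apply/seteqP; split => x /=; rewrite in_cons => /predU1P.
by apply: PU => //; exact: (@finite_seq {classic T}).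
Qed.

Section CompactCovers.
Variables (X : topologicalType) (K : set X).
Hypothesis cK : compact K.

(* If no member of D contains K, the sets K minus a member of D generate a
   proper filter; a cluster point of it in K escapes every member of D. *)
Lemma compact_directed_cover (D : set (set X)) :
  (forall U, D U -> open U) -> D !=set0 ->
  (forall U V, D U -> D V -> exists2 W, D W & U `|` V `<=` W) ->
  K `<=` \bigcup_(U in D) U -> exists2 U, D U & K `<=` U.
Proof.
move=> oD [U0 DU0] dirD cover; apply: contrapT => noU.
pose F := [set A | exists2 U, D U & K `\` U `<=` A].
have PF : ProperFilter F.
  apply: Build_ProperFilter_ex.
    move=> A [U DU sA]; apply: contrapT => /forallNP A0.
    apply: noU; exists U => // x Kx; apply: contrapT => Ux.
    exact: (A0 x (sA x (conj Kx Ux))).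
  split.
  - by exists U0.
  - move=> A B [U DU sA] [V DV sB]; have [W DW sW] := dirD U V DU DV.
    exists W => // x [Kx Wx]; split.
      by apply: sA; split => // Ux; apply: Wx; apply: sW; left.
    by apply: sB; split => // Vx; apply: Wx; apply: sW; right.
  - by move=> A B sAB [U DU sA]; exists U => //; apply: subset_trans sAB.
have FK : F K by exists U0 => // x [].
have [x [Kx clx]] := cK PF FK.
have [U DU Ux] := cover x Kx.
have FKU : F (K `\` U) by exists U.
by have [y [[_ nUy] Uy]] := clx _ _ FKU (open_nbhs_nbhs (conj (oD U DU) Ux)).
Qed.

Lemma compact_finite_subcover (I : Type) (D : set I) (f : I -> set X) :
  (forall i, D i -> open (f i)) -> K `<=` \bigcup_(i in D) f i ->
  exists2 D', finite_set D' & D' `<=` D /\ K `<=` \bigcup_(i in D') f i.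
Proof.
move=> oD cover.
have [_ [D' fD' [sD' ->]] sK] : exists2 U, (exists2 D', finite_set D' &
    D' `<=` D /\ U = \bigcup_(i in D') f i) & K `<=` U.
  apply: compact_directed_cover.
  - by move=> _ [D' _ [sD' ->]]; apply: bigcup_open => i /sD' /oD.
  - exists set0, set0; [exact: finite_set0|split=> //]; by rewrite bigcup_set0.
  - move=> _ _ [D1 fD1 [sD1 ->]] [D2 fD2 [sD2 ->]].
    exists (\bigcup_(i in D1 `|` D2) f i); last by rewrite bigcup_setU.
    exists (D1 `|` D2); first by rewrite finite_setU.
    by split => // i [/sD1|/sD2].
  - move=> x /cover [i Di fix_i]; exists (f i) => //.
    exists [set i]; [exact: finite_set1|split; last by rewrite bigcup_set1].
    by move=> j ->.
by exists D'.
Qed.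

End CompactCovers.

Lemma open_from_local (X : topologicalType) (A : set X) :
  (forall x, A x -> exists2 U, open U & U x /\ U `<=` A) -> open A.
Proof.
move=> Aloc; rewrite openE => x /Aloc [U oU [Ux sUA]].
exact: filterS sUA (open_nbhs_nbhs (conj oU Ux)).
Qed.

(* The complements of the members of D cover the compact set ~` N. *)
Lemma closed_family_subset_open (X : topologicalType) (D : set (set X)) (N : set X) :
  compact [set: X] -> open N -> (forall V, D V -> closed V) -> D !=set0 ->
  setI_closed D -> (forall z, ~ N z -> exists2 V, D V & ~ V z) ->
  exists2 V, D V & V `<=` N.
Proof.
move=> cX oN cD [V0 DV0] DI sepD.
have cNN : compact (~` N) by exact: subclosed_compact (open_closedC oN) cX _.
have [_ [V DV <-] sV] : exists2 U, [set ~` V | V in D] U & ~` N `<=` U.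
  apply: compact_directed_cover => //.
  - by move=> _ [V /cD cV <-]; exact: closed_openC.
  - by exists (~` V0), V0.
  - move=> _ _ [V1 DV1 <-] [V2 DV2 <-]; exists (~` (V1 `&` V2)); last by rewrite setCI.
    by exists (V1 `&` V2) => //; apply: DI.
  - by move=> z /sepD [V DV nVz]; exists (~` V) => //; exists V.
by exists V => // x Vx; apply: contrapT => /sV.
Qed.

Lemma stone_clopen_nbhs (X : topologicalType) : stone_space X ->
  forall (N : set X) x, open N -> N x -> exists2 C, clopen C /\ C x & C `<=` N.
Proof.
move=> [cX _ zX] N x oN Nx; apply: closed_family_subset_open => //.
- by move=> C [[]].
- by exists setT; split => //; exact: clopenT.
- by move=> C1 C2 [c1 x1] [c2 x2]; split; [exact: clopenI|].
- move=> z nNz; have xz : x != z by apply/eqP => exz; apply: nNz; rewrite -exz.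
  by have [U [cU Ux nUz]] := zX x z xz; exists U.
Qed.

Lemma zero_dimensional_hausdorff (X : topologicalType) :
  zero_dimensional X -> hausdorff_space X.
Proof.
move=> zX; rewrite open_hausdorff => x y /zX [U [[oU cU] Ux nUy]].
exists (U, ~` U); first by rewrite !inE.
by split => //; [exact: closed_openC|apply/eqP; rewrite setICr].
Qed.

Lemma zero_dimensional_sep (X : topologicalType) (B : set (set X)) :
  (forall U, B U -> clopen U) ->
  (forall x y, x != y -> exists2 U, B U & ~ (U x <-> U y)) -> zero_dimensional X.
Proof.
move=> cB sepB x y /sepB [U /cB [oU cU] Uxy].
have [Ux|nUx] := pselect (U x); first by exists U; split => // Uy; apply: Uxy.
exists (~` U); split => //; first by split; [exact: closed_openC|exact: open_closedC].
by move=> nUy; apply: Uxy; split => // /nUy.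
Qed.

Lemma set_neq_witness (T : Type) (A B : set T) : A <> B ->
  exists x, A x /\ ~ B x \/ B x /\ ~ A x.
Proof.
move=> nAB; apply: contrapT => /forallNP noX; apply: nAB; apply/seteqP.
by split => x Ax; apply: contrapT => nBx; apply: (noX x); [left|right].
Qed.

(** * Frames and their filters *)

Local Notation "a ⊑ b" := (fle a b) (at level 70).
Local Notation "a ⊓ b" := (fmeet a b) (at level 40, left associativity).

Section FrameTheory.
Variable L : frame.
Implicit Types (a b c d x y : L) (S T : set L).

Lemma fle_refl a : a ⊑ a. Proof. by case: (fle_po L). Qed.
Lemma fle_anti a b : a ⊑ b -> b ⊑ a -> a = b. Proof. by case: (fle_po L) => _ + _; apply. Qed.
Lemma fle_trans a b c : a ⊑ b -> b ⊑ c -> a ⊑ c. Proof. by case: (fle_po L) => _ _; apply. Qed.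

Lemma fmeet_lel a b : a ⊓ b ⊑ a. Proof. by have /fmeet_glb[] := fle_refl (a ⊓ b). Qed.
Lemma fmeet_ler a b : a ⊓ b ⊑ b. Proof. by have /fmeet_glb[] := fle_refl (a ⊓ b). Qed.
Lemma fle_meet c a b : c ⊑ a -> c ⊑ b -> c ⊑ a ⊓ b. Proof. by move=> ca cb; apply/fmeet_glb. Qed.

Lemma fle_top a : a ⊑ ftop L. Proof. exact: fsup_ub. Qed.
Lemma fbot_le a : fbot L ⊑ a. Proof. by apply: fsup_least. Qed.
Lemma fle_bot a : a ⊑ fbot L -> a = fbot L. Proof. by move=> abot; apply: fle_anti (fbot_le a). Qed.

Lemma fsup_subset S T : S `<=` T -> fsup S ⊑ fsup T.
Proof. by move=> sST; apply: fsup_least => a /sST; apply: fsup_ub. Qed.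

Lemma fjoin_lel a b : a ⊑ fjoin a b. Proof. by apply: fsup_ub; left. Qed.
Lemma fjoin_ler a b : b ⊑ fjoin a b. Proof. by apply: fsup_ub; right. Qed.
Lemma fjoin_le a b c : a ⊑ c -> b ⊑ c -> fjoin a b ⊑ c.
Proof. by move=> ac bc; apply: fsup_least => x [->|->]. Qed.

Lemma fmeet_le2 a b a' b' : a ⊑ a' -> b ⊑ b' -> a ⊓ b ⊑ a' ⊓ b'.
Proof.
by move=> aa' bb'; apply: fle_meet; [apply: fle_trans (fmeet_lel _ _) aa'|
  apply: fle_trans (fmeet_ler _ _) bb'].
Qed.

Lemma fmeetC a b : a ⊓ b = b ⊓ a.
Proof.
by apply: fle_anti; apply: fle_meet;
  [apply: fmeet_ler|apply: fmeet_lel|apply: fmeet_ler|apply: fmeet_lel].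
Qed.

Lemma fmeet_idPl a b : a ⊑ b -> a ⊓ b = a.
Proof. by move=> ab; apply: fle_anti (fmeet_lel _ _) (fle_meet (fle_refl a) ab). Qed.

Lemma fmeetT a : a ⊓ ftop L = a. Proof. exact/fmeet_idPl/fle_top. Qed.

Lemma fmeet_sup_le a S b : (forall s, S s -> a ⊓ s ⊑ b) -> a ⊓ fsup S ⊑ b.
Proof. by move=> aSb; rewrite fdistr; apply: fsup_least => _ [s Ss <-]; apply: aSb. Qed.

Lemma fmeet_join_le a x y b : a ⊓ x ⊑ b -> a ⊓ y ⊑ b -> a ⊓ fjoin x y ⊑ b.
Proof. by move=> axb ayb; apply: fmeet_sup_le => s [->|->]. Qed.

Lemma fsup_setU1 x S : fsup (x |` S) ⊑ fjoin x (fsup S).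
Proof.
apply: fsup_least => y [->|Sy]; first exact: fjoin_lel.
exact: fle_trans (fsup_ub Sy) (fjoin_ler _ _).
Qed.

Lemma fmeet_pseudocompl a : a ⊓ pseudocompl a = fbot L.
Proof. by apply: fle_bot; apply: fmeet_sup_le => s ->; apply: fle_refl. Qed.

Lemma fle_pseudocompl a x : a ⊓ x = fbot L -> x ⊑ pseudocompl a.
Proof. exact: fsup_ub. Qed.

Lemma complemented_top : complemented (ftop L).
Proof. exact: fle_anti (fle_top _) (fjoin_lel _ _). Qed.

Lemma complemented_meet c d : complemented c -> complemented d -> complemented (c ⊓ d).
Proof.
rewrite /complemented => cc dd; apply: fle_anti (fle_top _) _.
have le_pc e : c ⊓ d ⊑ e -> pseudocompl e ⊑ pseudocompl (c ⊓ d).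
  move=> cde; apply/fle_pseudocompl/fle_bot.
  by rewrite -(fmeet_pseudocompl e); apply: fmeet_le2 cde (fle_refl _).
rewrite -{1}cc; apply: fjoin_le; last first.
  exact: fle_trans (le_pc _ (fmeet_lel c d)) (fjoin_ler _ _).
rewrite -[X in X ⊑ _]fmeetT -dd; apply: fmeet_join_le; first exact: fjoin_lel.
exact: fle_trans (fmeet_ler _ _) (fle_trans (le_pc _ (fmeet_ler c d)) (fjoin_ler _ _)).
Qed.

(* Add the pseudocomplement of c to the cover, and use compactness of the top. *)
Lemma complemented_compact c : compact_frame L -> complemented c -> fway_below c c.
Proof.
move=> cL cc S cS.
have : ftop L ⊑ fsup (S `|` [set pseudocompl c]).
  rewrite -cc; apply: fjoin_le; last by apply: fsup_ub; right.
  by apply: fle_trans cS (fsup_subset _) => x Sx; left.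
move=> /cL [T0 [fT0 sT0 tT0]].
exists (T0 `\` [set pseudocompl c]); split.
- exact: finite_setD.
- by move=> x [/sT0 [|->]] // /(_ erefl).
- rewrite -[X in X ⊑ _]fmeetT; apply: fle_trans (fmeet_le2 (fle_refl c) tT0) _.
  apply: fmeet_sup_le => t T0t; have [->|ne] := pselect (t = pseudocompl c).
    by rewrite fmeet_pseudocompl; apply: fbot_le.
  by apply: fle_trans (fmeet_ler _ _) _; apply: fsup_ub.
Qed.

End FrameTheory.

Section Filters.
Variable L : frame.
Implicit Types (a b c x y z : L) (S T : set L) (p q F : set L).

Definition frame_filter p := [/\ p (ftop L), (forall a b, p a -> a ⊑ b -> p b) &
  (forall a b, p a -> p b -> p (a ⊓ b))].
Definition prime_filter p :=
  [/\ frame_filter p, ~ p (fbot L) & forall a b, p (fjoin a b) -> p a \/ p b].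
Definition cprime_filter p :=
  frame_filter p /\ forall S, p (fsup S) -> exists2 s, S s & p s.

Lemma filter_top p : frame_filter p -> p (ftop L). Proof. by case. Qed.
Lemma filter_le p a b : frame_filter p -> p a -> a ⊑ b -> p b.
Proof. by case=> _ + _; apply. Qed.
Lemma filter_meet p a b : frame_filter p -> p a -> p b -> p (a ⊓ b).
Proof. by case=> _ _; apply. Qed.

Lemma filter_meetE p a b : frame_filter p -> p (a ⊓ b) <-> p a /\ p b.
Proof.
move=> fp; split; last by case; apply: filter_meet.
by move=> pab; split; apply: filter_le fp pab _; [exact: fmeet_lel|exact: fmeet_ler].
Qed.

Lemma prime_filter_filter p : prime_filter p -> frame_filter p. Proof. by case. Qed.
Lemma prime_filter_bot p : prime_filter p -> ~ p (fbot L). Proof. by case. Qed.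

Lemma prime_filter_joinE p a b : prime_filter p -> p (fjoin a b) <-> p a \/ p b.
Proof.
move=> [fp _ pj]; split; first exact: pj.
by case=> h; apply: filter_le fp h _; [exact: fjoin_lel|exact: fjoin_ler].
Qed.

Lemma prime_filter_complemented p c : prime_filter p -> complemented c ->
  p c <-> ~ p (pseudocompl c).
Proof.
move=> pp cc; split.
  move=> pc pc'; apply: (prime_filter_bot pp); rewrite -(fmeet_pseudocompl c).
  exact: filter_meet (prime_filter_filter pp) pc pc'.
move=> npc'; have : p (fjoin c (pseudocompl c)) by rewrite cc; case: pp => -[].
by move=> /(prime_filter_joinE _ _ pp) [].
Qed.

Lemma prime_filter_fsup_finite p T : prime_filter p -> finite_set T ->
  p (fsup T) -> exists2 t, T t & p t.
Proof.
move=> pp; move: T; apply: finite_set_ind => [/(prime_filter_bot pp)//|A x _ IH].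
have [fp _ _] := pp.
move=> /(filter_le fp)/(_ (fsup_setU1 _ _))/(prime_filter_joinE _ _ pp).
by case=> [px|/IH [t At pt]]; [exists x; first left|exists t; first right].
Qed.

Lemma cprime_filter_filter p : cprime_filter p -> frame_filter p. Proof. by case. Qed.
Lemma cprime_filter_sup p S : cprime_filter p -> p (fsup S) -> exists2 s, S s & p s.
Proof. by case=> _; apply. Qed.

Definition up_set a := [set x | a ⊑ x].

Lemma up_set_filter a : frame_filter (up_set a).
Proof. by split; [exact: fle_top|exact: fle_trans|exact: fle_meet]. Qed.

Definition filter_adjoin p a := [set x | exists2 m, p m & m ⊓ a ⊑ x].

Lemma filter_adjoin_filter p a : frame_filter p -> frame_filter (filter_adjoin p a).
Proof.
move=> fp; split.
- by exists (ftop L); [exact: filter_top|exact: fle_top].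
- by move=> x y [m pm max] xy; exists m => //; apply: fle_trans xy.
- move=> x y [m pm max] [m' pm' may]; exists (m ⊓ m'); first exact: filter_meet.
  apply: fle_meet; [apply: fle_trans max|apply: fle_trans may];
    apply: fmeet_le2 (fle_refl _); [exact: fmeet_lel|exact: fmeet_ler].
Qed.

Lemma filter_adjoin_sub p a : p `<=` filter_adjoin p a.
Proof. by move=> m pm; exists m => //; apply: fmeet_lel. Qed.

Lemma filter_adjoin_in p a : frame_filter p -> filter_adjoin p a a.
Proof. by move=> fp; exists (ftop L); [exact: filter_top|exact: fmeet_ler]. Qed.

Section MaximalFilter.
Variables (F : set L) (b : L).
Hypotheses (fF : frame_filter F) (nFb : ~ F b).

Let avoiding G := frame_filter (F `|` G) /\ ~ (F `|` G) b.

Let avoiding_chain_bigcup (C : set (set L)) : C `<=` avoiding ->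
  total_on C subset -> avoiding (\bigcup_(G in C) G).
Proof.
move=> sCa totC; have [Ft Fu Fm] := fF.
split; last by move=> [//|[G CG Gb]]; apply: (sCa G CG).2; right.
split; first by left.
- move=> x y [Fx|[G CG Gx]] xy; first by left; apply: Fu xy.
  have [[_ Gu _] _] := sCa G CG.
  by have [|Gy] := Gu x y (or_intror Gx) xy; [left|right; exists G].
- suff meetG G x y : C G -> (F `|` G) x -> (F `|` G) y ->
    (F `|` \bigcup_(G in C) G) (x ⊓ y).
    move=> x y [Fx|[G CG Gx]] [Fy|[H CH Hy]].
    + by left; apply: Fm.
    + exact: meetG CH (or_introl Fx) (or_intror Hy).
    + exact: meetG CG (or_intror Gx) (or_introl Fy).
    + have [GH|HG] := totC G H CG CH.
        exact: meetG CH (or_intror (GH x Gx)) (or_intror Hy).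
      exact: meetG CG (or_intror Gx) (or_intror (HG y Hy)).
  move=> CG xG yG; have [[_ _ Gm] _] := sCa G CG.
  by have [|Gxy] := Gm x y xG yG; [left|right; exists G].
Qed.

Lemma maximal_filter_avoiding : exists M, [/\ frame_filter M, F `<=` M, ~ M b &
  forall N, frame_filter N -> M `<=` N -> ~ N b -> N = M].
Proof.
have [G [[fFG nFGb] maxG]] := Zorn_bigcup avoiding_chain_bigcup.
exists (F `|` G); split => // N fN FGN nNb.
apply/seteqP; split => //; apply: contrapT => NFG.
have FN : F `<=` N := subset_trans (@subsetUl _ F G) FGN.
apply: (maxG N).
- split; first exact: subset_trans (@subsetUr _ F G) FGN.
  by move=> NG; apply: NFG => x /NG; right.
- by rewrite /avoiding (setUidPr F N).2.
Qed.

End MaximalFilter.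

(* A maximal filter avoiding b is prime: if it missed both x and y, adjoining
   either one would reach b, hence so would adjoining their join. *)
Theorem prime_filter_theorem F b : frame_filter F -> ~ F b ->
  exists2 p, prime_filter p & F `<=` p /\ ~ p b.
Proof.
move=> fF nFb; have [M [fM FM nMb maxM]] := maximal_filter_avoiding fF nFb.
have adjoin_b z : ~ M z -> exists2 m, M m & m ⊓ z ⊑ b.
  move=> nMz; apply: contrapT => nb.
  have Mz := maxM _ (filter_adjoin_filter z fM) (@filter_adjoin_sub M z) nb.
  by apply: nMz; rewrite -Mz; exact: filter_adjoin_in.
exists M => //; split => // [Mbot|x y Mxy].
  by apply: nMb; apply: filter_le fM Mbot (fbot_le b).
apply: contrapT => /not_orP [nMx nMy].
have [m1 M1 h1] := adjoin_b x nMx; have [m2 M2 h2] := adjoin_b y nMy.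
apply: nMb; apply: filter_le fM (filter_meet fM (filter_meet fM M1 M2) Mxy) _.
apply: fmeet_join_le; [apply: fle_trans h1|apply: fle_trans h2];
  apply: fmeet_le2 (fle_refl _); [exact: fmeet_lel|exact: fmeet_ler].
Qed.

Lemma prime_filter_sep a b : ~ a ⊑ b -> exists2 p, prime_filter p & p a /\ ~ p b.
Proof.
move=> nab; have [p pp [sp npb]] := prime_filter_theorem (up_set_filter a) nab.
by exists p => //; split => //; apply: sp; apply: fle_refl.
Qed.

Definition fimpl a b := fsup [set x | x ⊓ a ⊑ b].

Lemma fmeet_fimpl_le a b : a ⊓ fimpl a b ⊑ b.
Proof. by apply: fmeet_sup_le => s; rewrite fmeetC. Qed.

Lemma fle_fimpl a b x : x ⊓ a ⊑ b -> x ⊑ fimpl a b.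
Proof. by move=> xab; apply: fsup_ub. Qed.

End Filters.

Section StoneFrames.
Variable L : frame.
Hypothesis sL : stone_frame L.
Implicit Types (a b c : L) (S : set L) (p : set L).

Lemma fsup_complemented_below S :
  fsup S ⊑ fsup [set e | complemented e /\ exists2 s, S s & e ⊑ s].
Proof.
apply: fsup_least => s Ss; rewrite (sL.2 s); apply: fsup_subset => e [ce es].
by split => //; exists s.
Qed.

Definition complemented_part p := [set x | exists2 c, complemented c /\ p c & c ⊑ x].

(* Complemented elements of a compact frame are compact, so a prime filter
   restricted to them becomes completely prime. *)
Lemma complemented_part_cprime p : prime_filter p -> cprime_filter (complemented_part p).
Proof.
move=> pp; have fp := prime_filter_filter pp; split; first split.
- exists (ftop L); last exact: fle_refl.
  by split; [exact: complemented_top|exact: filter_top].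
- by move=> a b [c pc ca] ab; exists c => //; apply: fle_trans ab.
- move=> a b [c [cc pc] ca] [d [cd pd] db]; exists (c ⊓ d); last exact: fmeet_le2.
  by split; [exact: complemented_meet|exact: filter_meet].
- move=> S [c [cc pc] cS].
  have [T [fT sT cT]] := complemented_compact sL.1 cc (fle_trans cS (fsup_complemented_below S)).
  have [t Tt pt] := prime_filter_fsup_finite pp fT (filter_le fp pc cT).
  have [ct [s Ss ts]] := sT t Tt.
  by exists s => //; exists t.
Qed.

Lemma stone_frame_cprime_sep a b : ~ a ⊑ b -> exists2 p, cprime_filter p & p a /\ ~ p b.
Proof.
move=> nab.
have [c [cc ca] ncb] : exists2 c, complemented c /\ c ⊑ a & ~ c ⊑ b.
  apply: contrapT => nc; apply: nab; rewrite (sL.2 a); apply: fsup_least => c cca.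
  by apply: contrapT => ncb; apply: nc; exists c.
have [p pp [pc npb]] := prime_filter_sep ncb.
exists (complemented_part p); first exact: complemented_part_cprime.
split; first by exists c.
by move=> [d [_ pd] db]; apply: npb; apply: filter_le (prime_filter_filter pp) pd db.
Qed.

End StoneFrames.

Section FrameHomomorphisms.
Variables L M : frame.
Implicit Types (h : L -> M) (a b : L).

Lemma frame_hom_can h (g : M -> L) :
  frame_hom h -> cancel h g -> cancel g h -> frame_hom g.
Proof.
move=> [h1 hm hs] hK gK; split.
- by rewrite -h1 hK.
- by move=> a b; rewrite -{1}(gK a) -{1}(gK b) -hm hK.
- move=> S; have hgS : h @` (g @` S) = S.
    by rewrite image_comp (eq_imagel (fun x _ => gK x)) image_id.
  by rewrite -[in LHS]hgS -hs hK.
Qed.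

Lemma frame_hom_le h a b : frame_hom h -> a ⊑ b -> h a ⊑ h b.
Proof. by move=> [_ hm _] ab; rewrite -(fmeet_idPl ab) hm; apply: fmeet_ler. Qed.

Lemma frame_hom_bot h : frame_hom h -> h (fbot L) = fbot M.
Proof. by move=> [_ _ hs]; rewrite /fbot hs image_set0. Qed.

Lemma frame_hom_join h a b : frame_hom h -> h (fjoin a b) = fjoin (h a) (h b).
Proof. by move=> [_ _ hs]; rewrite /fjoin hs image_setU !image_set1. Qed.

End FrameHomomorphisms.

Section SetFrame.
Variables (X : Type) (P : set (set X)).
Hypothesis PI : setI_closed P.

Definition set_frame_car := {U : set X | P U}.

Definition set_frame_meet (U V : set_frame_car) : set_frame_car :=
  exist _ _ (PI (proj2_sig U) (proj2_sig V)).

Variable sup : set set_frame_car -> set_frame_car.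
Hypothesis sup_ub : forall S (U : set_frame_car), S U -> proj1_sig U `<=` proj1_sig (sup S).
Hypothesis sup_least : forall S (V : set_frame_car),
  (forall U, S U -> proj1_sig U `<=` proj1_sig V) -> proj1_sig (sup S) `<=` proj1_sig V.
Hypothesis sup_distr : forall (U : set_frame_car) S,
  proj1_sig U `&` proj1_sig (sup S) = proj1_sig (sup [set set_frame_meet U V | V in S]).

Definition set_frame_le (U V : set_frame_car) := proj1_sig U `<=` proj1_sig V.

Lemma set_frame_le_po : partial_order set_frame_le.
Proof.
split => [U|U V UV VU|U V W]; first exact: subset_refl.
  by apply: sig_eq; apply/seteqP.
exact: subset_trans.
Qed.

Lemma set_frame_meet_glb U V W :
  set_frame_le W (set_frame_meet U V) <-> set_frame_le W U /\ set_frame_le W V.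
Proof. by rewrite /set_frame_le /= subsetI. Qed.

Lemma set_frame_distr U S :
  set_frame_meet U (sup S) = sup [set set_frame_meet U V | V in S].
Proof. by apply: sig_eq; rewrite /= sup_distr. Qed.

Definition set_frame : frame :=
  @Frame set_frame_car set_frame_le sup set_frame_meet set_frame_le_po sup_ub sup_least
    set_frame_meet_glb set_frame_distr.

End SetFrame.

Lemma ultra_prime_filter (L : frame) (T : Type) (F : set_system T) (e : L -> set T) :
  UltraFilter F -> e (ftop L) = setT -> e (fbot L) = set0 ->
  (forall a b, e (a ⊓ b) = e a `&` e b) -> (forall a b, e (fjoin a b) = e a `|` e b) ->
  prime_filter [set a | F (e a)].
Proof.
move=> UF eT e0 eI eU; have PF : ProperFilter F := ultra_proper.
have e_le a b : a ⊑ b -> e a `<=` e b.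
  by move=> ab; rewrite -(fmeet_idPl ab) eI; apply: subIsetr.
split; first split.
- by rewrite /= eT; exact: filterT.
- by move=> a b Fa /e_le eab; apply: filterS eab Fa.
- by move=> a b Fa Fb; rewrite /= eI; exact: filterI.
- by rewrite /= e0 => /filter_not_empty.
- move=> a b; rewrite /= eU => Fab.
  have [Fa|FNa] := in_ultra_setVsetC (e a) UF; first by left.
  by right; apply: filterS (filterI Fab FNa) => x [[]].
Qed.

(** * Stone spaces and Stone frames *)

Section OpenFrame.
Variable X : topologicalType.

Definition open_sup (S : set (set_frame_car (@open X))) : set_frame_car (@open X) :=
  exist _ (\bigcup_(U in S) proj1_sig U) (bigcup_open (fun U _ => proj2_sig U)).

Lemma open_sup_ub S (U : set_frame_car (@open X)) :
  S U -> proj1_sig U `<=` proj1_sig (open_sup S).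
Proof. by move=> SU x Ux; exists U. Qed.

Lemma open_sup_least S (V : set_frame_car (@open X)) :
  (forall U, S U -> proj1_sig U `<=` proj1_sig V) -> proj1_sig (open_sup S) `<=` proj1_sig V.
Proof. by move=> SV x [U SU Ux]; apply: SV SU _ Ux. Qed.

Lemma open_sup_distr (U : set_frame_car (@open X)) S :
  proj1_sig U `&` proj1_sig (open_sup S) =
  proj1_sig (open_sup [set set_frame_meet (@openI X) U V | V in S]).
Proof.
apply/seteqP; split => [x [Ux [V SV Vx]]|x [_ [V SV <-] [Ux Vx]]].
  by exists (set_frame_meet (@openI X) U V) => //; exists V.
by split => //; exists V.
Qed.

Definition open_frame : frame := set_frame open_sup_ub open_sup_least open_sup_distr.

Lemma open_frame_sup (S : set open_frame) :
  proj1_sig (fsup S) = \bigcup_(U in S) proj1_sig U.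
Proof. by []. Qed.

Lemma open_frame_top : proj1_sig (ftop open_frame) = setT.
Proof.
apply/seteqP; split => // x _.
by exists (exist _ setT (@openT X) : open_frame).
Qed.

Lemma open_frame_bot : proj1_sig (fbot open_frame) = set0.
Proof. by rewrite open_frame_sup bigcup_set0. Qed.

Lemma open_frame_complemented (C : set X) (cC : clopen C) :
  complemented (exist _ C cC.1 : open_frame).
Proof.
apply: fle_anti (fle_top _) _ => x _; rewrite open_frame_sup.
have [Cx|nCx] := pselect (C x); first by exists (exist _ C cC.1) => //; left.
exists (pseudocompl (exist _ C cC.1 : open_frame)); first by right.
exists (exist _ (~` C) (closed_openC cC.2) : open_frame) => //.
by apply: sig_eq; apply/seteqP; split => // y [].
Qed.

Lemma open_frame_pseudocompl (U : open_frame) : complemented U ->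
  proj1_sig (pseudocompl U) = ~` proj1_sig U.
Proof.
move=> cU; apply/seteqP; split => [x Ux' Ux|x nUx].
  have : proj1_sig (U ⊓ pseudocompl U) x by split.
  by rewrite fmeet_pseudocompl open_frame_bot.
have : proj1_sig (fjoin U (pseudocompl U)) x by rewrite cU open_frame_top.
by rewrite open_frame_sup => -[V [->|->]].
Qed.

Lemma open_frame_stone : stone_space X -> stone_frame open_frame.
Proof.
move=> sX; have [cX _ _] := sX; split.
  move=> S cover.
  have coverX : [set: X] `<=` \bigcup_(U in S) proj1_sig U.
    by move=> x _; apply: cover; rewrite open_frame_top.
  have [T fT [sTS cT]] := compact_finite_subcover cX (fun U _ => proj2_sig U) coverX.
  by exists T; split => // x _; apply: cT.
move=> a; apply: fle_anti; last by apply: fsup_least => c [].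
move=> x ax; have [C [cC Cx] sCa] := stone_clopen_nbhs sX (proj2_sig a) ax.
by exists (exist _ C cC.1) => //; split => //; exact: open_frame_complemented.
Qed.

End OpenFrame.

Section OpenPreimage.
Variables (X Y : topologicalType) (f : X -> Y).
Hypothesis cf : continuous f.

Definition open_preimage (U : open_frame Y) : open_frame X :=
  exist _ (f @^-1` proj1_sig U) (proj1 (continuousP f) cf _ (proj2_sig U)).

Lemma open_preimage_hom : frame_hom open_preimage.
Proof.
split.
- apply: sig_eq; rewrite [RHS]open_frame_top -(preimage_setT f) -(open_frame_top Y).
  by [].
- by move=> U V; apply: sig_eq.
- move=> S; apply: sig_eq; rewrite [RHS]open_frame_sup.
  rewrite -[LHS]/(f @^-1` proj1_sig (fsup S)) open_frame_sup preimage_bigcup.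
  apply/seteqP; split => [x [U SU Ux]|x [_ [U SU <-] Ux]]; last by exists U.
  by exists (open_preimage U) => //; exists U.
Qed.

End OpenPreimage.

Definition OmegaF : functor Stone (op_category StoneFrm).
Proof.
refine (@Functor Stone (op_category StoneFrm)
  (fun X => exist _ (open_frame (proj1_sig X)) (open_frame_stone (proj2_sig X)))
  (fun X Y f => exist _ (open_preimage (proj2_sig f)) (open_preimage_hom (proj2_sig f)))
  _ _).
- by move=> X; apply: sig_eq; apply: funext => U; apply: sig_eq.
- by move=> X Y Z g f; apply: sig_eq; apply: funext => U; apply: sig_eq.
Defined.

Lemma OmegaF_faithful (X Y : ob Stone) (f f' : hom Stone X Y) :
  Defs.fmap OmegaF f = Defs.fmap OmegaF f' -> f = f'.
Proof.
move=> /(congr1 (@proj1_sig _ _)) /= ff'.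
apply: sig_eq; apply: funext => x; apply: contrapT => /eqP ne.
have [_ _ zY] := proj2_sig Y; have [U [cU Ufx nUf'x]] := zY _ _ ne.
have /= Uff' := congr1 (fun k => proj1_sig (k (exist _ U cU.1)) x) ff'.
by apply: nUf'x; rewrite -Uff'.
Qed.

(* If no y worked, the opens U with x outside h U would cover Y, but h maps
   their join, the top, to a set containing x. *)
Lemma open_frame_hom_point (X Y : topologicalType) (h : open_frame Y -> open_frame X) :
  stone_space Y -> frame_hom h ->
  forall x, exists y, forall U, proj1_sig U y <-> proj1_sig (h U) x.
Proof.
move=> sY hh x; have [h1 hm hs] := hh.
have [y hy] : exists y, forall U, proj1_sig U y -> proj1_sig (h U) x.
  apply: contrapT => /forallNP noy.
  pose S := [set U : open_frame Y | ~ proj1_sig (h U) x].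
  have Stop : fsup S = ftop (open_frame Y).
    apply: sig_eq; rewrite open_frame_sup open_frame_top.
    apply/seteqP; split => // y _; have /existsNP [U /not_implyP [Uy nhU]] := noy y.
    by exists U.
  have : proj1_sig (h (fsup S)) x by rewrite Stop h1 open_frame_top.
  by rewrite hs open_frame_sup => -[_ [U SU <-]].
exists y => U; split; first exact: hy.
rewrite {1}((open_frame_stone sY).2 U) hs open_frame_sup => -[_ [C [cC CU] <-] hCx].
apply: CU; apply: contrapT => nCy.
have : proj1_sig (h (C ⊓ pseudocompl C)) x.
  by rewrite hm; split => //; apply: hy; rewrite open_frame_pseudocompl.
by rewrite fmeet_pseudocompl (frame_hom_bot hh) open_frame_bot.
Qed.

Lemma OmegaF_full (X Y : ob Stone) (h : hom (op_category StoneFrm) (OmegaF X) (OmegaF Y)) :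
  exists f, Defs.fmap OmegaF f = h.
Proof.
case: h => h hh; pose f x := proj1_sig (cid (open_frame_hom_point (proj2_sig Y) hh x)).
have fP x U : proj1_sig U (f x) <-> proj1_sig (h U) x.
  exact: (proj2_sig (cid (open_frame_hom_point (proj2_sig Y) hh x))).
have cf : continuous f.
  apply/continuousP => A oA.
  have -> : f @^-1` A = proj1_sig (h (exist _ A oA)).
    by apply/seteqP; split => x /(fP x (exist _ A oA)).
  exact: proj2_sig.
exists (exist _ f cf : hom Stone X Y).
by apply: sig_eq; apply: funext => U; apply: sig_eq; apply/seteqP; split => x /(fP x U).
Qed.

Definition pt (L : frame) := {p : set L | cprime_filter p}.
HB.instance Definition _ (L : frame) := gen_eqMixin (pt L).
HB.instance Definition _ (L : frame) := gen_choiceMixin (pt L).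

Section PointTopology.
Variable L : frame.

Definition pt_open (U : set (pt L)) :=
  forall p, U p -> exists a, proj1_sig p a /\ forall q : pt L, proj1_sig q a -> U q.

Lemma pt_openT : pt_open setT.
Proof.
move=> p _; exists (ftop L); split => //.
exact: filter_top (cprime_filter_filter (proj2_sig p)).
Qed.

Lemma pt_openI : setI_closed pt_open.
Proof.
move=> U V oU oV p [Up Vp]; have [a [pa aU]] := oU p Up; have [b [pb bV]] := oV p Vp.
exists (a ⊓ b); split; first exact: filter_meet (cprime_filter_filter (proj2_sig p)) pa pb.
move=> q /(filter_meetE _ _ (cprime_filter_filter (proj2_sig q))) [qa qb].
by split; [apply: aU|apply: bV].
Qed.

Lemma pt_open_bigcup (I : Type) (f : I -> set (pt L)) :
  (forall i, pt_open (f i)) -> pt_open (\bigcup_i f i).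
Proof.
move=> fo p [i _ fip]; have [a [pa af]] := fo i p fip.
by exists a; split => // q qa; exists i => //; apply: af.
Qed.

End PointTopology.

HB.instance Definition _ (L : frame) :=
  isOpenTopological.Build (pt L) (@pt_openT L) (@pt_openI L) (@pt_open_bigcup L).

Section PointBasics.
Variable L : frame.
Implicit Types (a b c : L) (S : set L) (p q : pt L).

Definition pt_basic a : set (pt L) := [set p | proj1_sig p a].

Lemma pt_basic_open a : open (pt_basic a).
Proof. by move=> p pa; exists a. Qed.

Lemma pt_basic_le a b : a ⊑ b -> pt_basic a `<=` pt_basic b.
Proof. by move=> ab p pa; apply: filter_le (cprime_filter_filter (proj2_sig p)) pa ab. Qed.

Lemma pt_basicT : pt_basic (ftop L) = setT.
Proof.
by apply/seteqP; split => // p _; apply: filter_top (cprime_filter_filter (proj2_sig p)).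
Qed.

Lemma pt_basicI a b : pt_basic (a ⊓ b) = pt_basic a `&` pt_basic b.
Proof.
apply/seteqP; split => p; have fp := cprime_filter_filter (proj2_sig p).
  by move/(filter_meetE _ _ fp).
by move/(filter_meetE _ _ fp).
Qed.

Lemma pt_basic_sup S : pt_basic (fsup S) = \bigcup_(s in S) pt_basic s.
Proof.
apply/seteqP; split => p.
  by move=> /(cprime_filter_sup (proj2_sig p)) [s Ss ps]; exists s.
by move=> [s Ss ps]; apply: pt_basic_le ps; apply: fsup_ub.
Qed.

Lemma pt_basic0 : pt_basic (fbot L) = set0.
Proof. by rewrite pt_basic_sup bigcup_set0. Qed.

Lemma pt_basicU a b : pt_basic (fjoin a b) = pt_basic a `|` pt_basic b.
Proof. by rewrite pt_basic_sup bigcup_setU !bigcup_set1. Qed.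

Lemma pt_basic_pseudocompl c : complemented c -> pt_basic (pseudocompl c) = ~` pt_basic c.
Proof.
move=> cc; apply/seteqP; split => p pc'.
  move=> pc; have : pt_basic (c ⊓ pseudocompl c) p by rewrite pt_basicI.
  by rewrite fmeet_pseudocompl pt_basic0.
have : pt_basic (fjoin c (pseudocompl c)) p by rewrite cc pt_basicT.
by rewrite pt_basicU => -[].
Qed.

Lemma pt_basic_clopen c : complemented c -> clopen (pt_basic c).
Proof.
move=> cc; split; first exact: pt_basic_open.
by rewrite -[pt_basic c]setCK -pt_basic_pseudocompl //; apply/open_closedC/pt_basic_open.
Qed.

Lemma pt_open_basic (U : set (pt L)) p : open U -> U p ->
  exists2 a, proj1_sig p a & pt_basic a `<=` U.
Proof. by move=> oU Up; have [a [pa aU]] := oU p Up; exists a. Qed.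

End PointBasics.

Section PointStone.
Variable L : frame.
Hypothesis sL : stone_frame L.
Implicit Types (a c : L) (p q : pt L).

Lemma pt_sep_complemented p q a : proj1_sig p a -> ~ proj1_sig q a ->
  exists2 c, complemented c & proj1_sig p c /\ ~ proj1_sig q c.
Proof.
rewrite (sL.2 a) => /(cprime_filter_sup (proj2_sig p)) [c [cc ca] pc] nqa.
by exists c => //; split => // qc; apply: nqa; apply: pt_basic_le qc; apply: fsup_ub.
Qed.

Lemma pt_zero_dimensional : zero_dimensional (pt L).
Proof.
apply: (@zero_dimensional_sep _ [set pt_basic c | c in @complemented L]).
  by move=> _ [c cc <-]; exact: pt_basic_clopen.
move=> p q /eqP npq; have [a [[pa nqa]|[qa npa]]] : exists a,
    proj1_sig p a /\ ~ proj1_sig q a \/ proj1_sig q a /\ ~ proj1_sig p a.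
- by apply: set_neq_witness => pq; apply: npq; apply: sig_eq.
- have [c cc [pc nqc]] := pt_sep_complemented pa nqa.
  by exists (pt_basic c); [exists c|move=> [/(_ pc)]].
- have [c cc [qc npc]] := pt_sep_complemented qa npa.
  by exists (pt_basic c); [exists c|move=> [_ /(_ qc)]].
Qed.

(* An ultrafilter F converges to the completely prime filter generated by the
   complemented c with pt_basic c in F. *)
Lemma pt_compact : compact [set: pt L].
Proof.
rewrite compact_ultra => F UF _; have PF : ProperFilter F := ultra_proper.
have pF := ultra_prime_filter UF (@pt_basicT L) (@pt_basic0 L) (@pt_basicI L) (@pt_basicU L).
exists (exist _ _ (complemented_part_cprime sL pF)); split => // B /=.
rewrite nbhsE => -[N [oN Nq] NB]; have [a [c [cc Fc] ca] aN] := pt_open_basic oN Nq.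
exact: filterS NB (filterS aN (filterS (pt_basic_le ca) Fc)).
Qed.

Lemma pt_stone : stone_space (pt L).
Proof.
split; [exact: pt_compact|exact: zero_dimensional_hausdorff pt_zero_dimensional|].
exact: pt_zero_dimensional.
Qed.

Definition to_open_pt a : open_frame (pt L) := exist _ (pt_basic a) (@pt_basic_open L a).

Definition of_open_pt (U : open_frame (pt L)) : L := fsup [set a | pt_basic a `<=` proj1_sig U].

Lemma to_open_pt_hom : frame_hom to_open_pt.
Proof.
split.
- by apply: sig_eq; rewrite [LHS]/= pt_basicT open_frame_top.
- by move=> a b; apply: sig_eq; rewrite /= pt_basicI.
- move=> S; apply: sig_eq; rewrite [LHS]/= pt_basic_sup open_frame_sup.
  apply/seteqP; split => [p [s Ss ps]|p [_ [s Ss <-] ps]]; last by exists s.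
  by exists (to_open_pt s) => //; exists s.
Qed.

Lemma of_open_ptK : cancel of_open_pt to_open_pt.
Proof.
move=> U; apply: sig_eq; rewrite /= pt_basic_sup; apply/seteqP; split.
  by move=> p [a aU pa]; apply: aU.
by move=> p Up; have [a pa aU] := pt_open_basic (proj2_sig U) Up; exists a.
Qed.

Lemma to_open_ptK : cancel to_open_pt of_open_pt.
Proof.
move=> a; apply: fle_anti; last by apply: fsup_ub => p.
apply: fsup_least => b /= ba; apply: contrapT => /(stone_frame_cprime_sep sL) [p cp [pb npa]].
exact: npa (ba (exist _ p cp) pb).
Qed.

End PointStone.

Lemma OmegaF_ess_surj (d : ob (op_category StoneFrm)) :
  exists c (u : hom (op_category StoneFrm) (OmegaF c) d)
    (v : hom (op_category StoneFrm) d (OmegaF c)),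
  v \oc u = idm (OmegaF c) /\ u \oc v = idm d.
Proof.
case: d => L sL.
exists (exist stone_space (pt L : topologicalType) (pt_stone sL) : ob Stone).
exists (exist _ (@to_open_pt L) (@to_open_pt_hom L)).
exists (exist _ (@of_open_pt L)
  (frame_hom_can (@to_open_pt_hom L) (to_open_ptK sL) (@of_open_ptK L))).
by split; apply: sig_eq; apply: funext => x /=; [exact: of_open_ptK|exact: to_open_ptK].
Qed.

Theorem Stone_dual_StoneFrm : equivalent Stone (op_category StoneFrm).
Proof. exact: fully_faithful_ess_surj_equivalent OmegaF_faithful OmegaF_full OmegaF_ess_surj. Qed.

(** * Stone L-spaces and their frames of clopen upsets *)

Section OrderedSpaces.
Variable X : ordtop.
Implicit Types U V : set X.

Lemma upsetI U V : upset U -> upset V -> upset (U `&` V).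
Proof. by move=> uU uV x y [Ux Vx] xy; split; [apply: uU Ux xy|apply: uV Vx xy]. Qed.

Lemma upsetU U V : upset U -> upset V -> upset (U `|` V).
Proof. by move=> uU uV x y [Ux|Vx] xy; [left; apply: uU Ux xy|right; apply: uV Vx xy]. Qed.

Lemma upset_bigcup (I : Type) (D : set I) (f : I -> set X) :
  (forall i, D i -> upset (f i)) -> upset (\bigcup_(i in D) f i).
Proof. by move=> uf x y [i Di fix_i] xy; exists i => //; apply: uf Di _ _ fix_i xy. Qed.

Lemma clopup_bigcup_open (S : set {U : set X | clopup U}) :
  open (\bigcup_(U in S) proj1_sig U).
Proof. by apply: bigcup_open => U _; case: (proj2_sig U) => -[]. Qed.

Lemma clopup_bigcup_upset (S : set {U : set X | clopup U}) :
  upset (\bigcup_(U in S) proj1_sig U).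
Proof. by apply: upset_bigcup => U _; case: (proj2_sig U). Qed.

Lemma clopupI : setI_closed (@clopup X).
Proof. by move=> U V [cU uU] [cV uV]; split; [exact: clopenI|exact: upsetI]. Qed.

Lemma clopupU U V : clopup U -> clopup V -> clopup (U `|` V).
Proof. by move=> [cU uU] [cV uV]; split; [exact: clopenU|exact: upsetU]. Qed.

Lemma clopupT : clopup [set: X]. Proof. by split; [exact: clopenT|]. Qed.

Lemma clopup0 : clopup (@set0 X). Proof. by split; [exact: clopen0|]. Qed.

Lemma down_subset U V : U `<=` V -> Defs.down U `<=` Defs.down V.
Proof. by move=> UV x [y Uy xy]; exists y => //; apply: UV. Qed.

Lemma downU U V : Defs.down (U `|` V) = Defs.down U `|` Defs.down V.
Proof.
apply/seteqP; split => [x [y [Uy|Vy] xy]|x [[y Uy xy]|[y Vy xy]]].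
- by left; exists y.
- by right; exists y.
- by exists y => //; left.
- by exists y => //; right.
Qed.

End OrderedSpaces.

Section PriestleySpaces.
Variable X : ordtop.
Hypothesis pX : priestley_space X.

Lemma priestley_compact : compact [set: X]. Proof. by case: pX => -[]. Qed.
Lemma priestley_antisym (x y : X) : ole x y -> ole y x -> x = y.
Proof. by case: pX => _ [_ + _] _; apply. Qed.
Lemma priestley_sep (x y : X) : ~ ole x y -> exists U, [/\ clopup U, U x & ~ U y].
Proof. by case: pX => _ _; apply. Qed.

Lemma clopup_nbhs (U : set X) x : open U -> upset U -> U x ->
  exists2 V, clopup V /\ V x & V `<=` U.
Proof.
move=> oU uU Ux; apply: closed_family_subset_open => //.
- exact: priestley_compact.
- by move=> V [[[]]].
- by exists setT; split => //; exact: clopupT.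
- by move=> V W [cV Vx] [cW Wx]; split; [exact: clopupI|].
- move=> z nUz; have nxz : ~ ole x z by move=> xz; apply: nUz; apply: uU Ux xz.
  by have [V [cV Vx nVz]] := priestley_sep nxz; exists V.
Qed.

Lemma clopup_diff_nbhs (N : set X) y : open N -> N y ->
  exists V W, [/\ clopup V, clopup W, V y, ~ W y & V `\` W `<=` N].
Proof.
move=> oN Ny.
have [_ [V [W [cV cW Vy nWy ->]]] sN] : exists2 A, (exists V W,
    [/\ clopup V, clopup W, V y, ~ W y & A = V `\` W]) & A `<=` N.
  apply: closed_family_subset_open => //.
  - exact: priestley_compact.
  - move=> _ [V [W [[[_ cV] _] [[oW _] _] _ _ ->]]].
    by rewrite setDE; apply: closedI => //; exact: open_closedC.
  - exists setT, setT, set0; split => //; [exact: clopupT|exact: clopup0|].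
    by rewrite setD0.
  - move=> _ _ [V1 [W1 [c1 d1 y1 n1 ->]]] [V2 [W2 [c2 d2 y2 n2 ->]]].
    exists (V1 `&` V2), (W1 `|` W2); split; [exact: clopupI|exact: clopupU|by []|by case|].
    by rewrite !setDE setCU setIACA.
  - move=> z nNz; have [yz|nyz] := pselect (ole y z).
      have nzy : ~ ole z y.
        by move=> zy; apply: nNz; rewrite -(priestley_antisym yz zy).
      have [W [cW Wz nWy]] := priestley_sep nzy.
      by exists (setT `\` W); [exists setT, W; split => //; exact: clopupT|case].
    have [V [cV Vy nVz]] := priestley_sep nyz.
    by exists (V `\` set0); [exists V, set0; split => //; exact: clopup0|case].
by exists V, W.
Qed.

End PriestleySpaces.

Section LSpaces.
Variable X : ordtop.
Hypothesis hX : L_space X.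

(* Around a point y above x, a clopen C has a clopen downset, which is an open
   neighbourhood of x; it meets W, and moving up inside W lands in C. *)
Lemma upset_closure (W : set X) : upset W -> upset (closure W).
Proof.
move=> uW x y clx xy B; rewrite nbhsE => -[N [oN Ny] NB].
have [[sX _ _] downC _] := hX.
have [C [cC Cy] CN] := stone_clopen_nbhs sX oN Ny.
have [z [Wz [c Cc zc]]] :=
  clx (Defs.down C) (open_nbhs_nbhs (conj (downC C cC).1 (ex_intro2 _ _ y Cy xy))).
by exists c; split; [apply: uW Wz zc|apply/NB/CN].
Qed.

Lemma clopup_closure_bigcup (S : set (set_frame_car (@clopup X))) :
  clopup (closure (\bigcup_(U in S) proj1_sig U)).
Proof.
have [_ _ open_closure] := hX; split; last exact/upset_closure/clopup_bigcup_upset.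
by split; [apply: open_closure; [exact: clopup_bigcup_open|exact: clopup_bigcup_upset]|
  exact: closed_closure].
Qed.

Definition clopup_sup S : set_frame_car (@clopup X) := exist _ _ (clopup_closure_bigcup S).

Lemma clopup_sup_ub S (U : set_frame_car (@clopup X)) :
  S U -> proj1_sig U `<=` proj1_sig (clopup_sup S).
Proof. by move=> SU x Ux; apply: subset_closure; exists U. Qed.

Lemma clopup_sup_least S (V : set_frame_car (@clopup X)) :
  (forall U, S U -> proj1_sig U `<=` proj1_sig V) -> proj1_sig (clopup_sup S) `<=` proj1_sig V.
Proof.
move=> SV; have [[_ cV] _] := proj2_sig V.
rewrite [X in _ `<=` X](closure_id _).1 //; apply: closureS.
by move=> x [U SU Ux]; apply: SV SU _ Ux.
Qed.

Lemma clopup_sup_distr (U : set_frame_car (@clopup X)) S :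
  proj1_sig U `&` proj1_sig (clopup_sup S) =
  proj1_sig (clopup_sup [set set_frame_meet (@clopupI X) U V | V in S]).
Proof.
have [[oU cU] _] := proj2_sig U; apply/seteqP; split => /=.
  move=> x [Ux clx] B nB.
  have [z [[V SV Vz] [Uz Bz]]] := clx _ (filterI (open_nbhs_nbhs (conj oU Ux)) nB).
  by exists z; split => //; exists (set_frame_meet (@clopupI X) U V) => //; exists V.
move=> x clx; split.
  rewrite ((closure_id _).1 cU); apply: (closureS _ clx).
  by move=> z [_ [V SV <-] [Uz _]].
by apply: (closureS _ clx) => z [_ [V SV <-] [_ Vz]]; exists V.
Qed.

Definition clopup_frame : frame :=
  set_frame clopup_sup_ub clopup_sup_least clopup_sup_distr.

Lemma clopup_frame_sup (S : set clopup_frame) :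
  proj1_sig (fsup S) = closure (\bigcup_(U in S) proj1_sig U).
Proof. by []. Qed.

Lemma clopup_frame_top : proj1_sig (ftop clopup_frame) = setT.
Proof.
apply/seteqP; split => // x _; apply: subset_closure.
by exists (exist _ setT (@clopupT X) : clopup_frame).
Qed.

Lemma clopup_frame_bot : proj1_sig (fbot clopup_frame) = set0.
Proof. by rewrite clopup_frame_sup bigcup_set0 closure0. Qed.

Lemma clopup_frame_join (U V : clopup_frame) :
  proj1_sig (fjoin U V) = proj1_sig U `|` proj1_sig V.
Proof.
rewrite clopup_frame_sup bigcup_setU !bigcup_set1 -(closure_id _).1 //.
by case: (proj2_sig U) => -[_ cU] _; case: (proj2_sig V) => -[_ cV] _; apply: closedU.
Qed.

Lemma clopup_frame_complemented (V : set X) (cV : clopen V) (bV : biset V) :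
  complemented (exist _ V (conj cV bV.1) : clopup_frame).
Proof.
have cNV : clopup (~` V).
  split; first by case: cV => oV cV'; split; [exact: closed_openC|exact: open_closedC].
  by move=> p q nVp pq Vq; apply: nVp; apply: bV.2 Vq pq.
apply: fle_anti (fle_top _) _ => z _; rewrite clopup_frame_join.
have [Vz|nVz] := pselect (V z); [by left|right; apply: subset_closure].
exists (exist _ (~` V) cNV : clopup_frame) => //.
by apply: sig_eq; rewrite clopup_frame_bot; apply/seteqP; split => // w [].
Qed.

End LSpaces.

Definition L_space_of_stone (X : ordtop) (h : stone_L_space X) : L_space X :=
  let: And3 hL _ _ := h in hL.

(* L-compactness turns a cover of X by the closure of a union into a cover by
   the union itself; the Stone density condition provides the complemented base. *)
Lemma clopup_frame_stone (X : ordtop) (hX : stone_L_space X) :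
  stone_frame (clopup_frame (L_space_of_stone hX)).
Proof.
have [hL Lcpt dense] := hX; have [[[cX _ _] _ _] _ _] := hL.
split.
  move=> S cover; have coverX : [set: X] `<=` \bigcup_(U in S) proj1_sig U.
    move=> x _; have : Lker [set: X] x by rewrite -Lcpt.
    move=> [V [_ VX Vx]]; apply: (VX _ _ _ _ _ Vx).
    - exact: clopup_bigcup_open.
    - exact: clopup_bigcup_upset.
    - by move=> y _; apply: cover; rewrite clopup_frame_top.
  have oS (U : clopup_frame _) : S U -> open (proj1_sig U).
    by case: (proj2_sig U) => -[].
  have [T fT [sTS cT]] := compact_finite_subcover cX oS coverX.
  by exists T; split => // x _; apply/subset_closure/cT.
move=> a; apply: fle_anti; last by apply: fsup_least => c [].
move=> x ax; apply: (closureS _ (dense _ (proj2_sig a) x ax)).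
move=> y [V [cV bV Va Vy]]; exists (exist _ V (conj cV bV.1)) => //.
by split => //; exact: clopup_frame_complemented.
Qed.

Section ClopupPreimage.
Variables (X Y : ordtop) (hX : L_space X) (hY : L_space Y) (f : X -> Y).
Hypothesis lf : L_morphism f.

Lemma clopup_preimage_clopup (V : clopup_frame hY) : clopup (f @^-1` proj1_sig V).
Proof.
have [cf mf _] := lf; have [cV uV] := proj2_sig V.
by split; [exact: preimage_clopen|move=> x y Vfx /mf; apply: uV].
Qed.

Definition clopup_preimage (V : clopup_frame hY) : clopup_frame hX :=
  exist _ _ (clopup_preimage_clopup V).

Lemma clopup_preimage_hom : frame_hom clopup_preimage.
Proof.
have [_ _ clf] := lf; split.
- apply: sig_eq; rewrite [RHS]clopup_frame_top -(preimage_setT f).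
  by rewrite -(clopup_frame_top hY).
- by move=> U V; apply: sig_eq.
- move=> S; apply: sig_eq; rewrite [RHS]clopup_frame_sup.
  rewrite -[LHS]/(f @^-1` proj1_sig (fsup S)) clopup_frame_sup.
  rewrite clf; [|exact: clopup_bigcup_open|exact: clopup_bigcup_upset].
  congr closure; rewrite preimage_bigcup; apply/seteqP; split.
    by move=> x [U SU Ux]; exists (clopup_preimage U) => //; exists U.
  by move=> x [_ [U SU <-] Ux]; exists U.
Qed.

End ClopupPreimage.

Definition ClopUpF : functor StoneLPries (op_category StoneFrm).
Proof.
refine (@Functor StoneLPries (op_category StoneFrm)
  (fun X => exist _ (clopup_frame (L_space_of_stone (proj2_sig X)))
                  (clopup_frame_stone (proj2_sig X)))
  (fun X Y f =>
     exist _ (@clopup_preimage _ _ (L_space_of_stone (proj2_sig X))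
                (L_space_of_stone (proj2_sig Y)) _ (proj2_sig f))
             (clopup_preimage_hom _ _ (proj2_sig f))) _ _).
- by move=> X; apply: sig_eq; apply: funext => U; apply: sig_eq.
- by move=> X Y Z g f; apply: sig_eq; apply: funext => U; apply: sig_eq.
Defined.

Lemma ClopUpF_faithful (X Y : ob StoneLPries) (f f' : hom StoneLPries X Y) :
  Defs.fmap ClopUpF f = Defs.fmap ClopUpF f' -> f = f'.
Proof.
have [[pY _ _] _ _] := proj2_sig Y.
suff le_gg' (g g' : hom StoneLPries X Y) : Defs.fmap ClopUpF g = Defs.fmap ClopUpF g' ->
    forall x, ole (proj1_sig g x) (proj1_sig g' x).
  move=> ff'; apply: sig_eq; apply: funext => x.
  by apply: (priestley_antisym pY); apply: le_gg'; [exact: ff'|exact: esym ff'].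
move=> gg' x; apply: contrapT => /(priestley_sep pY) [U [cU Ugx nUg'x]].
have /= Ugg' := congr1 (fun k => proj1_sig (proj1_sig k (exist _ U cU)) x) gg'.
by apply: nUg'x; rewrite -Ugg'.
Qed.

Section ClopupPoints.
Variables (X Y : ordtop) (hX : L_space X) (hY : L_space Y).
Variable h : clopup_frame hY -> clopup_frame hX.
Hypothesis hh : frame_hom h.

(* The sets V \ W with x in h V and x outside h W form a family of closed sets
   closed under finite intersections (h preserves meets and joins), none of
   them empty (h is monotone); by compactness they have a common point. *)
Lemma clopup_hom_point x : exists y, forall V, proj1_sig V y <-> proj1_sig (h V) x.
Proof.
have [h1 hm _] := hh; apply: contrapT => /forallNP noy.
have [_ [V [W [hVx nhWx ->]]] VW0] : exists2 A, (exists V W, [/\ proj1_sig (h V) x,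
    ~ proj1_sig (h W) x & A = proj1_sig V `\` proj1_sig W]) & A `<=` set0.
  have [[[cY _ _] _ _] _ _] := hY.
  apply: closed_family_subset_open => //; first exact: open0.
  - move=> _ [V [W [_ _ ->]]]; rewrite setDE; apply: closedI.
      by case: (proj2_sig V) => -[].
    by apply: open_closedC; case: (proj2_sig W) => -[].
  - exists (proj1_sig (ftop (clopup_frame hY)) `\` proj1_sig (fbot (clopup_frame hY))).
    exists (ftop _), (fbot _); split => //; first by rewrite h1 clopup_frame_top.
    by rewrite (frame_hom_bot hh) clopup_frame_bot.
  - move=> _ _ [V1 [W1 [x1 n1 ->]]] [V2 [W2 [x2 n2 ->]]].
    exists (V1 ⊓ V2), (fjoin W1 W2); split; first by rewrite hm.
      by rewrite frame_hom_join // clopup_frame_join => -[].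
    by rewrite clopup_frame_join !setDE setCU setIACA.
  - move=> y _; have /existsNP [V nV] := noy y.
    have [Vy|nVy] := pselect (proj1_sig V y).
      exists (proj1_sig (ftop (clopup_frame hY)) `\` proj1_sig V); last by case.
      exists (ftop _), V; split => //; first by rewrite h1 clopup_frame_top.
      by move=> hVx; apply: nV.
    exists (proj1_sig V `\` proj1_sig (fbot (clopup_frame hY))); last by case.
    exists V, (fbot _); split => //; last by rewrite (frame_hom_bot hh) clopup_frame_bot.
    by apply: contrapT => nhVx; apply: nV; split.
have VW : V ⊑ W by move=> z Vz; apply: contrapT => nWz; exact: VW0 z (conj Vz nWz).
by apply: nhWx; apply: (frame_hom_le hh VW).
Qed.

Variable f : X -> Y.
Hypothesis fP : forall x V, proj1_sig V (f x) <-> proj1_sig (h V) x.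

Lemma clopup_point_map_continuous : continuous f.
Proof.
have [pY _ _] := hY; apply/continuousP => A oA; apply: open_from_local => x Afx.
have [V [W [cV cW Vfx nWfx VWA]]] := clopup_diff_nbhs pY oA Afx.
pose V' : clopup_frame hY := exist _ V cV; pose W' : clopup_frame hY := exist _ W cW.
exists (proj1_sig (h V') `\` proj1_sig (h W')).
  rewrite setDE; apply: openI; first by case: (proj2_sig (h V')) => -[].
  by apply: closed_openC; case: (proj2_sig (h W')) => -[].
split; first by split; [apply/(fP x V')|move=> /(fP x W')].
by move=> z [hVz nhWz]; apply: VWA; split; [apply/(fP z V')|move=> /(fP z W')].
Qed.

Lemma clopup_point_map_monotone x x' : ole x x' -> ole (f x) (f x').
Proof.
have [pY _ _] := hY; move=> xx'; apply: contrapT => /(priestley_sep pY) [U [cU Ufx nUfx']].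
pose U' : clopup_frame hY := exist _ U cU.
have [_ uhU] := proj2_sig (h U').
by apply/nUfx'/(fP x' U'); apply: uhU xx'; apply/(fP x U').
Qed.

(* An open upset is the union of the clopen upsets inside it, so its closure is
   their join in the frame of clopen upsets, which h preserves. *)
Lemma clopup_point_map_closure (U : set Y) : open U -> upset U ->
  f @^-1` closure U = closure (f @^-1` U).
Proof.
move=> oU uU; have [pY _ _] := hY; have [_ _ hs] := hh.
pose S := [set V : clopup_frame hY | proj1_sig V `<=` U].
have US : U = \bigcup_(V in S) proj1_sig V.
  apply/seteqP; split => [y Uy|y [V SV Vy]]; last exact: SV.
  by have [V [cV Vy] VU] := clopup_nbhs pY oU uU Uy; exists (exist _ V cV).
have preimage_h V : f @^-1` proj1_sig V = proj1_sig (h V).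
  by apply/seteqP; split => x /(fP x V).
rewrite {1}US -clopup_frame_sup preimage_h hs clopup_frame_sup US preimage_bigcup.
congr closure; apply/seteqP; split => [x [_ [V SV <-] hVx]|x [V SV Vfx]].
  by exists V => //; rewrite preimage_h.
by exists (h V); [exists V|rewrite -preimage_h].
Qed.

Lemma clopup_point_map_L_morphism : L_morphism f.
Proof.
split; [exact: clopup_point_map_continuous|exact: clopup_point_map_monotone|].
exact: clopup_point_map_closure.
Qed.

End ClopupPoints.

Lemma ClopUpF_full (X Y : ob StoneLPries)
    (h : hom (op_category StoneFrm) (ClopUpF X) (ClopUpF Y)) :
  exists f, Defs.fmap ClopUpF f = h.
Proof.
case: h => h hh; pose f x := proj1_sig (cid (clopup_hom_point hh x)).
have fP x V : proj1_sig V (f x) <-> proj1_sig (h V) x.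
  exact: (proj2_sig (cid (clopup_hom_point hh x))).
exists (exist _ f (clopup_point_map_L_morphism hh fP) : hom StoneLPries X Y).
by apply: sig_eq; apply: funext => V; apply: sig_eq; apply/seteqP; split => x /(fP x V).
Qed.

(** * The Priestley space of prime filters *)

Definition pfilters (L : frame) := {p : set L | prime_filter p}.
HB.instance Definition _ (L : frame) := gen_eqMixin (pfilters L).
HB.instance Definition _ (L : frame) := gen_choiceMixin (pfilters L).

Section PatchTopology.
Variable L : frame.

Definition patch_open (U : set (pfilters L)) :=
  forall p, U p -> exists a b, [/\ proj1_sig p a, ~ proj1_sig p b &
    forall q : pfilters L, proj1_sig q a -> ~ proj1_sig q b -> U q].

Lemma patch_openT : patch_open setT.
Proof.
move=> p _; exists (ftop L), (fbot L); split => //.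
  exact: filter_top (prime_filter_filter (proj2_sig p)).
exact: prime_filter_bot (proj2_sig p).
Qed.

Lemma patch_openI : setI_closed patch_open.
Proof.
move=> U V oU oV p [Up Vp]; have pp := proj2_sig p.
have [a [b [pa npb aU]]] := oU p Up; have [a' [b' [pa' npb' aV]]] := oV p Vp.
exists (a ⊓ a'), (fjoin b b'); split.
- exact: filter_meet (prime_filter_filter pp) pa pa'.
- by move=> /(prime_filter_joinE _ _ pp) [].
- move=> q; have pq := proj2_sig q.
  move=> /(filter_meetE _ _ (prime_filter_filter pq)) [qa qa'].
  by move=> /(prime_filter_joinE _ _ pq)/not_orP [nqb nqb']; split; [apply: aU|apply: aV].
Qed.

Lemma patch_open_bigcup (I : Type) (f : I -> set (pfilters L)) :
  (forall i, patch_open (f i)) -> patch_open (\bigcup_i f i).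
Proof.
move=> fo p [i _ fip]; have [a [b [pa npb abf]]] := fo i p fip.
by exists a, b; split => // q qa nqb; exists i => //; apply: abf.
Qed.

End PatchTopology.

HB.instance Definition _ (L : frame) :=
  isOpenTopological.Build (pfilters L) (@patch_openT L) (@patch_openI L)
    (@patch_open_bigcup L).

Definition XL (L : frame) : ordtop :=
  @OrdTop (pfilters L : topologicalType) (fun p q => proj1_sig p `<=` proj1_sig q).

Section PrimeFilterSpace.
Variable L : frame.
Implicit Types (a b c : L) (A : set L) (p q : XL L).

Definition phi a : set (XL L) := [set p | proj1_sig p a].

Lemma phiT : phi (ftop L) = setT.
Proof.
by apply/seteqP; split => // p _; exact: filter_top (prime_filter_filter (proj2_sig p)).
Qed.

Lemma phi0 : phi (fbot L) = set0.
Proof. by apply/seteqP; split => // p /(prime_filter_bot (proj2_sig p)). Qed.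

Lemma phiI a b : phi (a ⊓ b) = phi a `&` phi b.
Proof.
apply/seteqP; split => p; have fp := prime_filter_filter (proj2_sig p).
  by move/(filter_meetE _ _ fp).
by move/(filter_meetE _ _ fp).
Qed.

Lemma phiU a b : phi (fjoin a b) = phi a `|` phi b.
Proof.
apply/seteqP; split => p; have pp := proj2_sig p.
  by move/(prime_filter_joinE _ _ pp).
by move/(prime_filter_joinE _ _ pp).
Qed.

Lemma phi_le a b : a ⊑ b -> phi a `<=` phi b.
Proof. by move=> ab p pa; exact: filter_le (prime_filter_filter (proj2_sig p)) pa ab. Qed.

Lemma phi_leW a b : phi a `<=` phi b -> a ⊑ b.
Proof.
move=> ab; apply: contrapT => /prime_filter_sep [p pp [pa npb]].
exact: npb (ab (exist _ p pp) pa).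
Qed.

Lemma phi_open a : open (phi a).
Proof. by move=> p pa; exists a, (fbot L); split => //; exact: prime_filter_bot (proj2_sig p). Qed.

Lemma phiC_open a : open (~` phi a).
Proof.
move=> p npa; exists (ftop L), a; split => //.
exact: filter_top (prime_filter_filter (proj2_sig p)).
Qed.

Lemma phi_closed a : closed (phi a).
Proof. by rewrite -[phi a]setCK; apply: open_closedC; exact: phiC_open. Qed.

Lemma phi_clopup a : clopup (phi a).
Proof. by split; [split; [exact: phi_open|exact: phi_closed]|move=> p q pa; apply]. Qed.

Lemma open_phi_basic (U : set (XL L)) p : open U -> U p ->
  exists a b, [/\ proj1_sig p a, ~ proj1_sig p b & phi a `&` ~` phi b `<=` U].
Proof.
by move=> oU Up; have [a [b [pa npb abU]]] := oU p Up; exists a, b; split => // q []/abU.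
Qed.

Lemma XL_partial_order : partial_order (@ole (XL L)).
Proof.
split => [p|p q pq qp|p q r]; [exact: subset_refl| |exact: subset_trans].
by apply: sig_eq; apply/seteqP.
Qed.

Lemma XL_zero_dimensional : zero_dimensional (XL L).
Proof.
apply: (@zero_dimensional_sep _ (range phi)).
  by move=> _ [a _ <-]; exact: (phi_clopup a).1.
move=> p q /eqP npq; have [a pqa] : exists a,
    proj1_sig p a /\ ~ proj1_sig q a \/ proj1_sig q a /\ ~ proj1_sig p a.
  by apply: set_neq_witness => pq; apply: npq; apply: sig_eq.
by exists (phi a) => //; case: pqa => -[pa nqa] pqa; apply: nqa; apply/pqa.
Qed.

(* An ultrafilter F converges to the prime filter of the a with phi a in F. *)
Lemma XL_compact : compact [set: XL L].
Proof.
rewrite compact_ultra => F UF _; have PF : ProperFilter F := ultra_proper.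
have pF := ultra_prime_filter UF phiT phi0 phiI phiU.
exists (exist _ _ pF); split => // B /=; rewrite nbhsE => -[N [oN Nq] NB].
have [a [b [Fa nFb abN]]] := open_phi_basic oN Nq.
have FNb : F (~` phi b) by have [] := in_ultra_setVsetC (phi b) UF.
exact: filterS NB (filterS abN (filterI Fa FNb)).
Qed.

Lemma XL_stone : stone_space (XL L).
Proof.
split; [exact: XL_compact|exact: zero_dimensional_hausdorff XL_zero_dimensional|].
exact: XL_zero_dimensional.
Qed.

End PrimeFilterSpace.

Section PrimeFilterLSpace.
Variable L : frame.
Implicit Types (a b : L) (A : set L) (p q : XL L).

Lemma open_upset_phi_nbhs (W : set (XL L)) p : open W -> upset W -> W p ->
  exists2 a, proj1_sig p a & phi a `<=` W.
Proof.
move=> oW uW Wp; have fp := prime_filter_filter (proj2_sig p).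
have [_ [a pa <-] aW] : exists2 V, [set phi a | a in proj1_sig p] V & V `<=` W.
  apply: closed_family_subset_open => //; first exact: XL_compact.
  - by move=> _ [a _ <-]; exact: phi_closed.
  - by exists (phi (ftop L)), (ftop L) => //; exact: filter_top.
  - move=> _ _ [a pa <-] [b pb <-]; exists (a ⊓ b); last exact: phiI.
    exact: filter_meet.
  - move=> q nWq; have npq : ~ (proj1_sig p `<=` proj1_sig q).
      by move=> pq; apply: nWq; apply: uW Wp pq.
    by have [a [pa nqa]] := nonsubset npq; exists (phi a) => //; exists a.
by exists a.
Qed.

Lemma phi_sup A : phi (fsup A) = closure (\bigcup_(a in A) phi a).
Proof.
apply/seteqP; split; last first.
  rewrite [X in _ `<=` X](closure_id _).1; last exact: phi_closed.
  by apply: closureS => p [a Aa pa]; apply: phi_le pa; apply: fsup_ub.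
move=> p pA B; rewrite nbhsE => -[N [oN Np] NB].
have [x [y [px npy xyN]]] := open_phi_basic oN Np.
apply: contrapT => noq; apply: npy; have fp := prime_filter_filter (proj2_sig p).
apply: filter_le fp (filter_meet fp px pA) _.
apply: fmeet_sup_le => a Aa; apply: phi_leW; rewrite phiI => q [qx qa].
apply: contrapT => nqy; apply: noq; exists q; split; first by exists a.
exact/NB/xyN.
Qed.

Lemma open_upset_phi_cover (W : set (XL L)) : open W -> upset W ->
  W = \bigcup_(a in [set a | phi a `<=` W]) phi a.
Proof.
move=> oW uW; apply/seteqP; split => [p Wp|p [a aW pa]]; last exact: aW.
by have [a pa aW] := open_upset_phi_nbhs oW uW Wp; exists a.
Qed.

Lemma closure_open_upset (W : set (XL L)) : open W -> upset W ->
  closure W = phi (fsup [set a | phi a `<=` W]).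
Proof. by move=> oW uW; rewrite phi_sup -open_upset_phi_cover. Qed.

Lemma clopup_phi (U : set (XL L)) : clopup U -> exists a, U = phi a.
Proof.
move=> [[oU cU] uU].
have cptU : compact U by exact: subclosed_compact cU (@XL_compact L) _.
have [_ [a aU <-] Ua] : exists2 V, [set phi a | a in [set a | phi a `<=` U]] V & U `<=` V.
  apply: compact_directed_cover => //.
  - by move=> _ [a _ <-]; exact: phi_open.
  - by exists (phi (fbot L)), (fbot L) => //=; rewrite phi0.
  - move=> _ _ [a aU <-] [b bU <-]; exists (phi (fjoin a b)); last by rewrite phiU.
    by exists (fjoin a b) => //=; rewrite phiU => p [/aU|/bU].
  - move=> p; rewrite {1}(open_upset_phi_cover oU uU) => -[a aU pa].
    by exists (phi a) => //; exists a.
by exists a; apply/seteqP.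
Qed.

Lemma down_phiD a b : Defs.down (phi a `&` ~` phi b) = ~` phi (fimpl a b) :> set (XL L).
Proof.
apply/seteqP; split.
  move=> q [r [ra nrb] qr] qab; apply: nrb; have fr := prime_filter_filter (proj2_sig r).
  exact: filter_le fr (filter_meet fr ra (qr _ qab)) (fmeet_fimpl_le a b).
move=> q nqab; have fq := prime_filter_filter (proj2_sig q).
have nGb : ~ filter_adjoin (proj1_sig q) a b.
  by move=> [m qm mab]; apply: nqab; apply: filter_le fq qm (fle_fimpl mab).
have [r pr [qar nrb]] := prime_filter_theorem (filter_adjoin_filter a fq) nGb.
exists (exist _ r pr : XL L); first by split; [apply/qar/filter_adjoin_in|].
by move=> m qm; apply/qar/filter_adjoin_sub.
Qed.

End PrimeFilterLSpace.

Section PrimeFilterStoneLSpace.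
Variable L : frame.
Implicit Types (a b c : L) (p q : XL L).

(* The down-closure of a basic clopen phi a \ phi b is the complement of
   phi (a -> b); a clopen set is a finite union of basic ones. *)
Lemma XL_down_clopen (C : set (XL L)) : clopen C -> clopen (Defs.down C).
Proof.
move=> [oC cC]; split.
  apply: open_from_local => q [p Cp qp]; have [a [b [pa npb abC]]] := open_phi_basic oC Cp.
  exists (~` phi (fimpl a b)); first exact: phiC_open.
  by rewrite -down_phiD; split; [exists p|exact: down_subset].
have cptC : compact C by exact: subclosed_compact cC (@XL_compact L) _.
have [V [oV VC cdV] CV] : exists2 V, [/\ open V, V `<=` C & closed (Defs.down V)] & C `<=` V.
  apply: compact_directed_cover => //; first by move=> V [].
  - exists set0; split; [exact: open0|by []|].
    by rewrite (_ : Defs.down set0 = set0); [exact: closed0|apply/seteqP; split => // x []].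
  - move=> V W [oV VC cdV] [oW WC cdW]; exists (V `|` W) => //.
    by split; [exact: openU|by move=> x [/VC|/WC]|rewrite downU; exact: closedU].
  - move=> p Cp; have [a [b [pa npb abC]]] := open_phi_basic oC Cp.
    exists (phi a `&` ~` phi b); last by split.
    split; [exact: openI (@phi_open L a) (@phiC_open L b)|exact: abC|].
    by rewrite down_phiD; apply: open_closedC; exact: phi_open.
by rewrite (_ : C = V) //; apply/seteqP.
Qed.

Lemma XL_L_space : L_space (XL L).
Proof.
split; last by move=> U oU uU; rewrite closure_open_upset //; exact: phi_open.
  split; [exact: XL_stone|exact: XL_partial_order|].
  move=> p q /nonsubset [a [pa nqa]].
  by exists (phi a); split => //; exact: phi_clopup.
exact: XL_down_clopen.
Qed.

Lemma phi_complemented_biset c : complemented c -> biset (phi c).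
Proof.
move=> cc; split; first by move=> p q pc; apply.
move=> p q qc pq; apply/(prime_filter_complemented (proj2_sig p) cc) => pc'.
exact: (prime_filter_complemented (proj2_sig q) cc).1 qc (pq _ pc').
Qed.

Hypothesis sL : stone_frame L.

(* If X lies in the closure of an open upset W, i.e. in phi of the join of the
   a with phi a inside W, then finitely many such a already join to the top,
   and every prime filter contains one of them. *)
Lemma XL_L_compact : L_compact (XL L).
Proof.
apply/seteqP; split => // p _; exists setT; split => //; first exact: clopupT.
move=> W oW uW; rewrite closure_open_upset // -phiT => /phi_leW /sL.1 [T [fT TW topT]].
move=> q _; have fq := prime_filter_filter (proj2_sig q).
have [t Tt qt] := prime_filter_fsup_finite (proj2_sig q) fT (filter_le fq (filter_top fq) topT).
exact: TW Tt q qt.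
Qed.

Lemma XL_stone_L_space : stone_L_space (XL L).
Proof.
split; [exact: XL_L_space|exact: XL_L_compact|].
move=> U /clopup_phi [a ->]; rewrite {1}(sL.2 a) phi_sup; apply: closureS.
move=> p [c [cc ca] pc]; exists (phi c); split => //; last exact: phi_le.
  exact: (phi_clopup c).1.
exact: phi_complemented_biset.
Qed.

End PrimeFilterStoneLSpace.

Section PrimeFilterRepresentation.
Variables (L : frame) (hL : L_space (XL L)).
Implicit Types (a : L) (U : clopup_frame hL).

Definition phi_clopup_frame a : clopup_frame hL := exist _ (phi a) (phi_clopup a).

Definition phi_inv U : L := fsup [set a | phi a `<=` proj1_sig U].

Lemma phi_clopup_frame_hom : frame_hom phi_clopup_frame.
Proof.
split.
- by apply: sig_eq; rewrite [LHS]/= phiT clopup_frame_top.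
- by move=> a b; apply: sig_eq; rewrite /= phiI.
- move=> S; apply: sig_eq; rewrite [LHS]/= phi_sup clopup_frame_sup; congr closure.
  apply/seteqP; split => [p [s Ss ps]|p [_ [s Ss <-] ps]]; last by exists s.
  by exists (phi_clopup_frame s) => //; exists s.
Qed.

Lemma phi_invK : cancel phi_inv phi_clopup_frame.
Proof.
move=> U; apply: sig_eq => /=; have [a0 Ua0] := clopup_phi (proj2_sig U).
rewrite Ua0; apply/seteqP; split; apply: phi_le.
  by apply: fsup_least => b; rewrite /= Ua0; exact: phi_leW.
by apply: fsup_ub; rewrite /= Ua0.
Qed.

Lemma phi_clopup_frameK : cancel phi_clopup_frame phi_inv.
Proof.
move=> a; apply: fle_anti; last by apply: fsup_ub => p.
by apply: fsup_least => b /phi_leW.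
Qed.

End PrimeFilterRepresentation.

Lemma ClopUpF_ess_surj (d : ob (op_category StoneFrm)) :
  exists c (u : hom (op_category StoneFrm) (ClopUpF c) d)
    (v : hom (op_category StoneFrm) d (ClopUpF c)),
  v \oc u = idm (ClopUpF c) /\ u \oc v = idm d.
Proof.
case: d => L sL; pose hL := L_space_of_stone (XL_stone_L_space sL).
exists (exist _ (XL L) (XL_stone_L_space sL) : ob StoneLPries).
exists (exist _ (@phi_clopup_frame L hL) (phi_clopup_frame_hom hL)).
exists (exist _ (@phi_inv L hL)
  (frame_hom_can (phi_clopup_frame_hom hL) (@phi_clopup_frameK L hL) (@phi_invK L hL))).
by split; apply: sig_eq; apply: funext => x /=; [exact: phi_invK|exact: phi_clopup_frameK].
Qed.

Theorem StoneLPries_dual_StoneFrm : equivalent StoneLPries (op_category StoneFrm).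
Proof.
exact: fully_faithful_ess_surj_equivalent ClopUpF_faithful ClopUpF_full ClopUpF_ess_surj.
Qed.

Theorem corollary5p19 :
  equivalent StoneLPries Stone /\ dually_equivalent StoneLPries StoneFrm.
Proof.
split; last exact: StoneLPries_dual_StoneFrm.
exact: equivalent_trans StoneLPries_dual_StoneFrm (equivalent_sym Stone_dual_StoneFrm).
Qed.
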